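(* Let $|\Psi_n\rangle\in\mathcal H^{\otimes n}$ be a permutation-invariant unit vector (i.e. $P_\pi|\Psi_n\rangle=|\Psi_n\rangle$ for all $\pi\in S_n$) and let $|\theta\rangle\in\mathcal H$ be a unit vector with $\langle\Psi_n|\theta^{\otimes n}\rangle\neq0$. Then for every $m\le n$ there is a unit vector $|\Psi_{n,m}\rangle\in\mathcal H^{\otimes n-m}$ such that $$|\Psi_{n,m}\rangle\langle\Psi_{n,m}|\le|\langle\Psi_n|\theta^{\otimes n}\rangle|^{-2}\,\mathrm{tr}_{1,\dots,m}(|\Psi_n\rangle\langle\Psi_n|),$$ and for every $r\le n-m$ there is an almost power state $|\Psi_{n,m,r}\rangle\in|\theta\rangle^{[\otimes,n-m,r]}$ (a unit vector) with $$\big\||\Psi_{n,m}\rangle\langle\Psi_{n,m}|-|\Psi_{n,m,r}\rangle\langle\Psi_{n,m,r}|\big\|_1\le2\sqrt2\,|\langle\Psi_n|\theta^{\otimes n}\rangle|^{-1}e^{-\frac{mr}{2n}}.$$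
   Context: $\mathcal H$ is a finite-dimensional Hilbert space; $P_\pi$ ($\pi\in S_n$) permutes the tensor factors of $\mathcal H^{\otimes n}$; $\mathrm{Sym}(\mathcal H^{\otimes n})$ is the symmetric subspace (vectors invariant under all $P_\pi$); $\mathrm{tr}_{1,\dots,m}$ is the partial trace over the first $m$ tensor factors. For a unit vector $|\theta\rangle\in\mathcal H$ and $0\le r\le n$, let $\mathcal V(\mathcal H^{\otimes n},|\theta\rangle^{\otimes n-r})=\{P_\pi(|\theta\rangle^{\otimes n-r}\otimes|\psi_r\rangle):\pi\in S_n,\ |\psi_r\rangle\in\mathcal H^{\otimes r}\}$, and define the set of almost power states $|\theta\rangle^{[\otimes,n,r]}=\mathrm{Sym}(\mathcal H^{\otimes n})\cap\mathrm{span}\,\mathcal V(\mathcal H^{\otimes n},|\theta\rangle^{\otimes n-r})$. *)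

From Stdlib Require Import Reals List Lra.
Import ListNotations.
Open Scope R_scope.

Definition C : Type := (R * R)%type.
Definition C0 : C := (0, 0).
Definition C1 : C := (1, 0).
Definition RtoC (x : R) : C := (x, 0).
Definition Cadd (a b : C) : C := (fst a + fst b, snd a + snd b).
Definition Copp (a : C) : C := (- fst a, - snd a).
Definition Csub (a b : C) : C := Cadd a (Copp b).
Definition Cmul (a b : C) : C :=
  (fst a * fst b - snd a * snd b, fst a * snd b + snd a * fst b).
Definition Cconj (a : C) : C := (fst a, - snd a).
Definition Cre (a : C) : R := fst a.
Definition Cim (a : C) : R := snd a.
Definition Cmod (a : C) : R := sqrt (fst a * fst a + snd a * snd a).
Definition Csum (l : list C) : C := fold_right Cadd C0 l.
Definition Cprod (l : list C) : C := fold_right Cmul C1 l.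

(* A basis index of H^{(x)k} is a word of length k over {0,...,d-1}. *)
Fixpoint words (d k : nat) : list (list nat) :=
  match k with
  | O => [[]]
  | S k' => flat_map (fun i => map (cons i) (words d k')) (seq 0 d)
  end.

(* vectors of H^{(x)k}: coordinates indexed by words (only words of length k
   over {0..d-1} matter); vectors of H are nat -> C on {0..d-1}. *)
Definition vec : Type := list nat -> C.
Definition vec1 : Type := nat -> C.

Definition inner (d k : nat) (u v : vec) : C :=
  Csum (map (fun w => Cmul (Cconj (u w)) (v w)) (words d k)).
Definition unit_vec (d k : nat) (v : vec) : Prop := inner d k v v = C1.

Definition inner1 (d : nat) (u v : vec1) : C :=
  Csum (map (fun i => Cmul (Cconj (u i)) (v i)) (seq 0 d)).
Definition unit_vec1 (d : nat) (v : vec1) : Prop := inner1 d v v = C1.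

Definition tpow (theta : vec1) : vec := fun w => Cprod (map theta w).

Definition tpow_tensor (k : nat) (theta : vec1) (psi : vec) : vec :=
  fun w => Cmul (Cprod (map theta (firstn k w))) (psi (skipn k w)).

Definition is_perm (n : nat) (pi : nat -> nat) : Prop :=
  (forall i, (i < n)%nat -> (pi i < n)%nat) /\
  (forall i j, (i < n)%nat -> (j < n)%nat -> pi i = pi j -> i = j).
Definition permute (n : nat) (pi : nat -> nat) (w : list nat) : list nat :=
  map (fun i => nth i w 0%nat) (map pi (seq 0 n)).
Definition Pperm (n : nat) (pi : nat -> nat) (v : vec) : vec :=
  fun w => v (permute n pi w).

Definition symmetric (d n : nat) (v : vec) : Prop :=
  forall pi, is_perm n pi -> forall w, In w (words d n) -> Pperm n pi v w = v w.

Definition inV (d n r : nat) (theta : vec1) (v : vec) : Prop :=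
  exists (pi : nat -> nat) (psi : vec), is_perm n pi /\
    forall w, In w (words d n) -> v w = Pperm n pi (tpow_tensor (n - r) theta psi) w.

Definition in_span (d n : nat) (S : vec -> Prop) (v : vec) : Prop :=
  exists l : list (C * vec), (forall p, In p l -> S (snd p)) /\
    forall w, In w (words d n) -> v w = Csum (map (fun p => Cmul (fst p) (snd p w)) l).

Definition almost_power (d n r : nat) (theta : vec1) (v : vec) : Prop :=
  symmetric d n v /\ in_span d n (inV d n r theta) v.

Definition op : Type := list nat -> list nat -> C.
Definition proj (v : vec) : op := fun w w' => Cmul (v w) (Cconj (v w')).
Definition Oscale (a : R) (A : op) : op := fun w w' => Cmul (RtoC a) (A w w').
Definition Osub (A B : op) : op := fun w w' => Csub (A w w') (B w w').
Definition Omul (d k : nat) (A B : op) : op :=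
  fun w w' => Csum (map (fun x => Cmul (A w x) (B x w')) (words d k)).
Definition Oadj (A : op) : op := fun w w' => Cconj (A w' w).
Definition Otrace (d k : nat) (A : op) : C := Csum (map (fun w => A w w) (words d k)).
Definition Oeq (d k : nat) (A B : op) : Prop :=
  forall w w', In w (words d k) -> In w' (words d k) -> A w w' = B w w'.

(* partial trace over the first m tensor factors: op on H^{(x)(m+k)} -> op on H^{(x)k} *)
Definition ptrace (d m : nat) (A : op) : op :=
  fun w w' => Csum (map (fun a => A (a ++ w) (a ++ w')) (words d m)).

Definition qform (d k : nat) (A : op) (v : vec) : C :=
  Csum (map (fun w => Csum (map (fun w' =>
     Cmul (Cconj (v w)) (Cmul (A w w') (v w'))) (words d k))) (words d k)).

Definition psd (d k : nat) (A : op) : Prop :=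
  forall v : vec, Cim (qform d k A v) = 0 /\ 0 <= Cre (qform d k A v).
Definition loewner_le (d k : nat) (A B : op) : Prop := psd d k (Osub B A).

(* ||A||_1 = tr sqrt(A^* A); t is the trace norm of A iff t = tr B for the
   (unique) positive semidefinite B with B B = A^* A. *)
Definition is_trnorm (d k : nat) (A : op) (t : R) : Prop :=
  exists B : op, psd d k B /\ Oeq d k (Omul d k B B) (Omul d k (Oadj A) A) /\
    t = Cre (Otrace d k B).

(* Write n = m + k and c = <Psi, theta^(x)n>.  The state Psi_nm is the normalisation of
   phi = (<theta^(x)m| (x) 1) Psi.  Cauchy-Schwarz over the first m factors gives
   |<x, phi>|^2 <= <x, tr_{1..m}(|Psi><Psi|) x>, and Cauchy-Schwarz against theta^(x)k
   gives |c|^2 <= ||phi||^2; together they yield the operator inequality.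

   For the almost power state we rotate everything by U^(x)n, where U is a Householder
   unitary with U^* e_0 = theta, so that theta becomes the basis vector e_0.  In the
   rotated picture phi is the restriction phi' of the rotated state to words beginning
   with m zeros.  Truncating phi' to words with at most r nonzero letters gives a
   symmetric vector spanned by permutations of e_0^(x)(k-r) (x) psi; rotating back gives
   Psi_nmr.  The discarded weight is controlled by a counting argument for the
   permutation-invariant weight w |-> |Psi'(w)|^2: among words with more than r nonzero
   letters, requiring one more leading zero costs a factor 1 - (r+1)/n, so the weight is
   at most exp(-mr/n).  Finally the trace norm of |u><u| - |v><v| for unit vectors is
   2 sqrt(1 - |<u,v>|^2). *)

From Pilot Require Import Defs.
From Stdlib Require Import Reals List Lra Lia Permutation Bool.
(* Re-import the definitions so that C, C1, ... do not refer to the binomial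
   coefficients exported by Reals. *)
Import Pilot.Defs.
Open Scope R_scope.

(* Equalities of complex expressions reduce to two polynomial identities over R. *)
Ltac Cunf := unfold Cadd, Copp, Csub, Cmul, Cconj, RtoC, C0, C1, Cre, Cim in *.
Ltac Ceq := Cunf; simpl; apply injective_projections; simpl; ring.

Lemma Cadd_comm a b : Cadd a b = Cadd b a. Proof. Ceq. Qed.
Lemma Cadd_assoc a b c : Cadd a (Cadd b c) = Cadd (Cadd a b) c. Proof. Ceq. Qed.
Lemma Cadd_0_l a : Cadd C0 a = a. Proof. destruct a; Ceq. Qed.
Lemma Cadd_0_r a : Cadd a C0 = a. Proof. destruct a; Ceq. Qed.
Lemma Cmul_0_r a : Cmul a C0 = C0. Proof. Ceq. Qed.
Lemma Cmul_0_l a : Cmul C0 a = C0. Proof. Ceq. Qed.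
Lemma Cmul_comm a b : Cmul a b = Cmul b a. Proof. Ceq. Qed.
Lemma Cmul_assoc a b c : Cmul a (Cmul b c) = Cmul (Cmul a b) c. Proof. Ceq. Qed.
Lemma Cmul_1_l a : Cmul C1 a = a. Proof. destruct a; Ceq. Qed.
Lemma Cmul_1_r a : Cmul a C1 = a. Proof. destruct a; Ceq. Qed.
Lemma Cmul_add_distr_r a b c : Cmul (Cadd b c) a = Cadd (Cmul b a) (Cmul c a). Proof. Ceq. Qed.
Lemma Cconj_add a b : Cconj (Cadd a b) = Cadd (Cconj a) (Cconj b). Proof. Ceq. Qed.
Lemma Cconj_mul a b : Cconj (Cmul a b) = Cmul (Cconj a) (Cconj b). Proof. Ceq. Qed.
Lemma Cconj_conj a : Cconj (Cconj a) = a. Proof. destruct a; Ceq. Qed.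
Lemma Cconj_RtoC x : Cconj (RtoC x) = RtoC x. Proof. Ceq. Qed.

Definition Cnorm2 (z : C) : R := fst z * fst z + snd z * snd z.

Lemma Cnorm2_nonneg z : 0 <= Cnorm2 z. Proof. unfold Cnorm2; nra. Qed.
Lemma Cconj_mul_self z : Cmul (Cconj z) z = RtoC (Cnorm2 z). Proof. unfold Cnorm2; Ceq. Qed.
Lemma Cmul_self_conj z : Cmul z (Cconj z) = RtoC (Cnorm2 z). Proof. unfold Cnorm2; Ceq. Qed.
Lemma Cnorm2_mul a b : Cnorm2 (Cmul a b) = Cnorm2 a * Cnorm2 b.
Proof. unfold Cnorm2, Cmul; simpl; ring. Qed.
Lemma Cnorm2_conj a : Cnorm2 (Cconj a) = Cnorm2 a.
Proof. unfold Cnorm2, Cconj; simpl; ring. Qed.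
Lemma Cnorm2_RtoC x : Cnorm2 (RtoC x) = x * x.
Proof. unfold Cnorm2, RtoC; simpl; ring. Qed.
Lemma Cnorm2_zero z : Cnorm2 z = 0 -> z = C0.
Proof.
  destruct z as [a b]; unfold Cnorm2, C0; simpl; intro H.
  assert (a = 0) by nra. assert (b = 0) by nra. subst; auto.
Qed.
Lemma Cnorm2_pos z : z <> C0 -> 0 < Cnorm2 z.
Proof.
  intro H. destruct (Cnorm2_nonneg z); auto. exfalso; apply H, Cnorm2_zero; auto.
Qed.
Lemma Cmod_Cnorm2 z : Cmod z = sqrt (Cnorm2 z). Proof. reflexivity. Qed.
Lemma Cmod_sq z : Cmod z ^ 2 = Cnorm2 z.
Proof. rewrite Cmod_Cnorm2. simpl. rewrite Rmult_1_r. apply sqrt_sqrt, Cnorm2_nonneg. Qed.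

Section Sums.
Context {A : Type}.

Lemma Csum_app (l1 l2 : list C) : Csum (l1 ++ l2) = Cadd (Csum l1) (Csum l2).
Proof. induction l1; simpl. rewrite Cadd_0_l; auto. rewrite IHl1, Cadd_assoc; auto. Qed.

Lemma Csum_ext (f g : A -> C) l : (forall x, In x l -> f x = g x) ->
  Csum (map f l) = Csum (map g l).
Proof. induction l; simpl; intros; auto. rewrite H, IHl; auto. Qed.

Lemma Csum_add (f g : A -> C) l :
  Csum (map (fun x => Cadd (f x) (g x)) l) = Cadd (Csum (map f l)) (Csum (map g l)).
Proof. induction l; simpl. Ceq. rewrite IHl. Ceq. Qed.

Lemma Csum_scal a (f : A -> C) l :
  Csum (map (fun x => Cmul a (f x)) l) = Cmul a (Csum (map f l)).
Proof. induction l; simpl. Ceq. rewrite IHl. Ceq. Qed.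

Lemma Csum_scal_r a (f : A -> C) l :
  Csum (map (fun x => Cmul (f x) a) l) = Cmul (Csum (map f l)) a.
Proof. induction l; simpl. Ceq. rewrite IHl. Ceq. Qed.

Lemma Csum_zero (f : A -> C) l : (forall x, In x l -> f x = C0) -> Csum (map f l) = C0.
Proof. induction l; simpl; intros; auto. rewrite H, IHl; auto. Ceq. Qed.

Lemma Csum_conj (f : A -> C) l :
  Cconj (Csum (map f l)) = Csum (map (fun x => Cconj (f x)) l).
Proof. induction l; simpl. Ceq. rewrite Cconj_add, IHl; auto. Qed.

Lemma Csum_perm (f : A -> C) l l' : Permutation l l' -> Csum (map f l) = Csum (map f l').
Proof.
  induction 1; simpl; auto. rewrite IHPermutation; auto.
  rewrite !Cadd_assoc, (Cadd_comm (f y)); auto. congruence.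
Qed.

Lemma Csum_flat_map {B} (f : B -> C) (g : A -> list B) l :
  Csum (map f (flat_map g l)) = Csum (map (fun x => Csum (map f (g x))) l).
Proof. induction l; simpl; auto. rewrite map_app, Csum_app, IHl; auto. Qed.

Lemma Csum_RtoC (f : A -> R) l :
  Csum (map (fun x => RtoC (f x)) l) = RtoC (fold_right Rplus 0 (map f l)).
Proof. induction l; simpl. Ceq. rewrite IHl. Ceq. Qed.

Lemma Csum_filter (P : A -> bool) (f : A -> C) l :
  Csum (map f (filter P l)) = Csum (map (fun x => if P x then f x else C0) l).
Proof.
  induction l; simpl; auto.
  destruct (P a); simpl; rewrite IHl; auto. rewrite Cadd_0_l; auto.
Qed.

Lemma Csum_delta (eqd : forall x y : A, {x = y} + {x <> y}) (f : A -> C) l a :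
  NoDup l -> In a l -> Csum (map (fun x => if eqd x a then f x else C0) l) = f a.
Proof.
  induction l; simpl; intros Hn Hi. contradiction.
  inversion Hn; subst. destruct (eqd a0 a).
  - subst. rewrite Csum_zero. apply Cadd_0_r.
    intros x Hx. destruct (eqd x a); auto. subst; contradiction.
  - destruct Hi. congruence. rewrite IHl; auto. apply Cadd_0_l.
Qed.
End Sums.

Lemma Csum_swap {A B} (f : A -> B -> C) l1 l2 :
  Csum (map (fun x => Csum (map (fun y => f x y) l2)) l1) =
  Csum (map (fun y => Csum (map (fun x => f x y) l1)) l2).
Proof.
  induction l1; simpl. symmetry; apply Csum_zero; auto.
  rewrite IHl1, <- Csum_add; auto.
Qed.

Lemma Csum_mul {A B} (f : A -> C) (g : B -> C) l l' :
  Cmul (Csum (map f l)) (Csum (map g l')) =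
  Csum (map (fun x => Csum (map (fun y => Cmul (f x) (g y)) l')) l).
Proof. induction l; simpl. apply Cmul_0_l. rewrite Cmul_add_distr_r, IHl, Csum_scal. auto. Qed.

Definition Rsum (l : list R) : R := fold_right Rplus 0 l.

Section RSums.
Context {A : Type}.
Lemma Rsum_ext (f g : A -> R) l : (forall x, In x l -> f x = g x) ->
  Rsum (map f l) = Rsum (map g l).
Proof. induction l; simpl; intros; auto. rewrite H, IHl; auto. Qed.
Lemma Rsum_le (f g : A -> R) l : (forall x, In x l -> f x <= g x) ->
  Rsum (map f l) <= Rsum (map g l).
Proof.
  unfold Rsum; induction l; simpl; intros. lra.
  pose proof (H a (or_introl eq_refl)).
  assert (fold_right Rplus 0 (map f l) <= fold_right Rplus 0 (map g l)) by (apply IHl; auto).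
  lra.
Qed.
Lemma Rsum_const a l : Rsum (map (fun _ : A => a) l) = INR (length l) * a.
Proof. induction l; simpl. ring. rewrite IHl. destruct (length l); simpl; ring. Qed.
Lemma Rsum_nonneg (f : A -> R) l : (forall x, In x l -> 0 <= f x) -> 0 <= Rsum (map f l).
Proof.
  intros. apply Rle_trans with (Rsum (map (fun _ => 0) l)).
  rewrite Rsum_const; lra. apply Rsum_le; auto.
Qed.
Lemma Rsum_scal a (f : A -> R) l : Rsum (map (fun x => a * f x) l) = a * Rsum (map f l).
Proof. induction l; simpl. ring. rewrite IHl; ring. Qed.
Lemma Rsum_add (f g : A -> R) l :
  Rsum (map (fun x => f x + g x) l) = Rsum (map f l) + Rsum (map g l).
Proof. induction l; simpl. ring. rewrite IHl; ring. Qed.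
Lemma Rsum_perm (f : A -> R) l l' : Permutation l l' -> Rsum (map f l) = Rsum (map f l').
Proof. induction 1; simpl; auto; try lra. Qed.
Lemma Rsum_in (f : A -> R) l a : (forall x, In x l -> 0 <= f x) -> In a l ->
  f a <= Rsum (map f l).
Proof.
  induction l; simpl; intros H Hi. contradiction.
  assert (0 <= Rsum (map f l)) by (apply Rsum_nonneg; auto).
  destruct Hi. subst. unfold Rsum in *; simpl; lra.
  assert (0 <= f a0) by auto. assert (f a <= Rsum (map f l)) by auto.
  unfold Rsum in *; simpl; lra.
Qed.
Lemma Rsum_flat_map {B} (f : B -> R) (g : A -> list B) l :
  Rsum (map f (flat_map g l)) = Rsum (map (fun x => Rsum (map f (g x))) l).
Proof.
  induction l; simpl; auto. rewrite map_app, <- IHl. unfold Rsum. rewrite fold_right_app.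
  generalize (fold_right Rplus 0 (map f (flat_map g l))).
  induction (map f (g a)); simpl; intros; auto. lra. rewrite IHl0; ring.
Qed.
Lemma Rsum_delta (eqd : forall x y : A, {x = y} + {x <> y}) (f : A -> R) l a :
  NoDup l -> In a l -> Rsum (map (fun x => if eqd x a then f x else 0) l) = f a.
Proof.
  induction l; simpl; intros Hn Hi. contradiction.
  inversion Hn; subst. destruct (eqd a0 a).
  - subst. assert (Rsum (map (fun x => if eqd x a then f x else 0) l) = 0).
    { transitivity (Rsum (map (fun _ => 0) l)). apply Rsum_ext.
      intros x Hx. destruct (eqd x a); auto. subst; contradiction. rewrite Rsum_const; ring. }
    unfold Rsum in *; simpl; lra.
  - destruct Hi. congruence. specialize (IHl H2 H). unfold Rsum in *; simpl; lra.
Qed.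
End RSums.

Lemma Rsum_swap {A B} (f : A -> B -> R) l1 l2 :
  Rsum (map (fun x => Rsum (map (fun y => f x y) l2)) l1) =
  Rsum (map (fun y => Rsum (map (fun x => f x y) l1)) l2).
Proof.
  induction l1; simpl. induction l2; simpl; auto. rewrite <- IHl2; ring.
  rewrite IHl1, <- Rsum_add; auto.
Qed.

Lemma words_In d k w :
  In w (words d k) <-> length w = k /\ (forall a, In a w -> (a < d)%nat).
Proof.
  revert w; induction k; simpl; intros w.
  - split.
    + intros [H|[]]; subst; simpl; split; auto; intros a [].
    + intros [H _]; destruct w; simpl in *; auto; discriminate.
  - rewrite in_flat_map. split.
    + intros [i [Hi Hw]]. rewrite in_map_iff in Hw. destruct Hw as [u [<- Hu]].
      apply IHk in Hu. destruct Hu. apply in_seq in Hi. simpl; split. congruence.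
      intros a [<-|Ha]; auto; lia.
    + intros [Hl Ha]. destruct w as [|i u]; simpl in *. discriminate.
      exists i; split. apply in_seq; split; [lia|]. simpl. apply Ha; auto.
      apply in_map. apply IHk. split; auto.
Qed.

Lemma words_length d k w : In w (words d k) -> length w = k.
Proof. intros Hw; apply words_In in Hw; tauto. Qed.

Lemma words_app d m k a u :
  In a (words d m) -> In u (words d k) -> In (a ++ u) (words d (m + k)).
Proof.
  intros Ha Hu. apply words_In in Ha, Hu. apply words_In. rewrite length_app.
  split. lia. intros z Hz. apply in_app_or in Hz. destruct Hz; [apply Ha|apply Hu]; auto.
Qed.

Lemma repeat_words d k : (0 < d)%nat -> In (repeat 0%nat k) (words d k).
Proof.
  intros. apply words_In. rewrite repeat_length. split; auto.
  intros a Ha. apply repeat_spec in Ha. lia.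
Qed.

Lemma NoDup_map_in {A B} (f : A -> B) l :
  NoDup l -> (forall x y, In x l -> In y l -> f x = f y -> x = y) -> NoDup (map f l).
Proof.
  induction 1; simpl; intros Hi; constructor.
  - rewrite in_map_iff. intros [y [Hy Hin]]. assert (y = x) by (apply Hi; auto). subst; auto.
  - apply IHNoDup; auto.
Qed.

Lemma words_NoDup d k : NoDup (words d k).
Proof.
  induction k; simpl. constructor; auto. constructor.
  induction (seq_NoDup d 0); simpl. constructor.
  apply NoDup_app. apply NoDup_map_in; auto. intros; congruence. auto.
  intros w Hw1 Hw2. rewrite in_map_iff in Hw1. destruct Hw1 as [u [<- _]].
  rewrite in_flat_map in Hw2. destruct Hw2 as [j [Hj Hw]]. rewrite in_map_iff in Hw.
  destruct Hw as [v [Hv _]]. inversion Hv; subst. contradiction.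
Qed.

Lemma Csum_words_S d k (f : list nat -> C) :
  Csum (map f (words d (S k))) =
  Csum (map (fun i => Csum (map (fun w => f (i :: w)) (words d k))) (seq 0 d)).
Proof. simpl. rewrite Csum_flat_map. apply Csum_ext; intros. rewrite map_map; auto. Qed.

Lemma Csum_words_app d m k (f : list nat -> C) :
  Csum (map f (words d (m + k))) =
  Csum (map (fun a => Csum (map (fun u => f (a ++ u)) (words d k))) (words d m)).
Proof.
  revert f; induction m; intros f; simpl plus.
  - simpl. rewrite Cadd_0_r; auto.
  - rewrite !Csum_words_S. apply Csum_ext; intros i _. rewrite IHm. auto.
Qed.

Lemma Rsum_words_app d m k (f : list nat -> R) :
  Rsum (map f (words d (m + k))) =
  Rsum (map (fun a => Rsum (map (fun u => f (a ++ u)) (words d k))) (words d m)).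
Proof.
  revert f; induction m; intros f; simpl plus.
  - simpl. unfold Rsum; simpl. rewrite Rplus_0_r; auto.
  - simpl. rewrite !Rsum_flat_map. apply Rsum_ext; intros i _.
    rewrite !map_map, IHm. auto.
Qed.

Definition wdelta (x y : list nat) : C := if list_eq_dec Nat.eq_dec x y then C1 else C0.

Lemma Csum_wdelta d k (f : list nat -> C) y : In y (words d k) ->
  Csum (map (fun x => Cmul (f x) (wdelta x y)) (words d k)) = f y.
Proof.
  intros Hy. rewrite <- (Csum_delta (list_eq_dec Nat.eq_dec) f (words d k) y (words_NoDup d k) Hy).
  apply Csum_ext. intros x _. unfold wdelta.
  destruct (list_eq_dec Nat.eq_dec x y). apply Cmul_1_r. apply Cmul_0_r.
Qed.

Lemma Csum_wdelta_l d k (f : list nat -> C) x : In x (words d k) ->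
  Csum (map (fun y => Cmul (f y) (wdelta x y)) (words d k)) = f x.
Proof.
  intros Hx. rewrite <- (Csum_wdelta d k f x Hx). apply Csum_ext. intros y _. unfold wdelta.
  destruct (list_eq_dec Nat.eq_dec x y), (list_eq_dec Nat.eq_dec y x); subst; congruence.
Qed.

Lemma nth_permute n pi w i : (i < n)%nat -> nth i (permute n pi w) 0%nat = nth (pi i) w 0%nat.
Proof.
  intro H. unfold permute. rewrite map_map.
  rewrite nth_indep with (d' := nth (pi 0%nat) w 0%nat) by (rewrite length_map, length_seq; auto).
  rewrite map_nth with (f := fun x => nth (pi x) w 0%nat). rewrite seq_nth; auto.
Qed.

Lemma length_permute n pi w : length (permute n pi w) = n.
Proof. unfold permute; rewrite !length_map, length_seq; auto. Qed.

Lemma perm_list n pi : is_perm n pi -> Permutation (map pi (seq 0 n)) (seq 0 n).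
Proof.
  intros [H1 H2].
  assert (Hnd : NoDup (map pi (seq 0 n))).
  { apply NoDup_map_in. apply seq_NoDup. intros x y Hx Hy. apply in_seq in Hx, Hy. apply H2; lia. }
  assert (Hincl : incl (map pi (seq 0 n)) (seq 0 n)).
  { intros x Hx. rewrite in_map_iff in Hx. destruct Hx as [y [<- Hy]]. apply in_seq in Hy.
    apply in_seq. split. lia. simpl. apply H1; lia. }
  apply NoDup_Permutation; auto using seq_NoDup. intros x; split; intros Hx; auto.
  apply (NoDup_length_incl (l := map pi (seq 0 n)) (l' := seq 0 n)); auto.
  rewrite length_map; auto.
Qed.

Lemma perm_surj n pi j : is_perm n pi -> (j < n)%nat -> exists i, (i < n)%nat /\ pi i = j.
Proof.
  intros Hp Hj. assert (In j (map pi (seq 0 n))).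
  { apply Permutation_in with (seq 0 n). apply Permutation_sym, perm_list; auto. apply in_seq; lia. }
  rewrite in_map_iff in H. destruct H as [i [Hi Hin]]. apply in_seq in Hin.
  exists i; split; auto; lia.
Qed.

Lemma map_nth_seq (w : list nat) : map (fun i => nth i w 0%nat) (seq 0 (length w)) = w.
Proof.
  apply nth_ext with (d := 0%nat) (d' := 0%nat). rewrite length_map, length_seq; auto.
  intros i Hi. rewrite length_map, length_seq in Hi.
  rewrite nth_indep with (d' := nth 0 w 0%nat) by (rewrite length_map, length_seq; auto).
  rewrite map_nth with (f := fun i => nth i w 0%nat). rewrite seq_nth; auto.
Qed.

Lemma permute_Permutation n pi w : is_perm n pi -> length w = n ->
  Permutation (permute n pi w) w.
Proof.
  intros Hp Hl. pose proof (perm_list n pi Hp) as Hp'. unfold permute. rewrite map_map.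
  transitivity (map (fun i => nth i w 0%nat) (seq 0 n)).
  - apply Permutation_map with (f := fun i => nth i w 0%nat) in Hp'. rewrite map_map in Hp'. exact Hp'.
  - rewrite <- Hl, map_nth_seq; auto.
Qed.

Lemma permute_words d n pi w : is_perm n pi -> In w (words d n) -> In (permute n pi w) (words d n).
Proof.
  intros Hp Hw. apply words_In in Hw. destruct Hw as [Hl Ha]. apply words_In. split.
  apply length_permute. intros a Ha'. apply Ha. apply Permutation_in with (permute n pi w); auto.
  apply permute_Permutation; auto.
Qed.

Lemma permute_inj n pi x w : is_perm n pi -> length x = n -> length w = n ->
  permute n pi x = permute n pi w -> x = w.
Proof.
  intros Hp Hx Hw He. apply nth_ext with (d := 0%nat) (d' := 0%nat). congruence.
  intros j Hj. destruct (perm_surj n pi j Hp) as [i [Hi <-]]. lia.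
  rewrite <- !nth_permute with (n := n); auto. rewrite He; auto.
Qed.

Lemma permute_words_perm d n pi : is_perm n pi ->
  Permutation (map (permute n pi) (words d n)) (words d n).
Proof.
  intros Hp. assert (Hnd : NoDup (map (permute n pi) (words d n))).
  { apply NoDup_map_in. apply words_NoDup. intros x y Hx Hy.
    apply (permute_inj n pi); eauto using words_length. }
  assert (Hincl : incl (map (permute n pi) (words d n)) (words d n)).
  { intros x Hx. rewrite in_map_iff in Hx. destruct Hx as [y [<- Hy]]. apply permute_words; auto. }
  apply NoDup_Permutation; [exact Hnd | apply words_NoDup |]. intro x; split; [apply Hincl|].
  apply (NoDup_length_incl (l := map (permute n pi) (words d n)) (l' := words d n)); auto.
  rewrite length_map; auto.
Qed.

Lemma Csum_permute d n pi (f : list nat -> C) : is_perm n pi ->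
  Csum (map (fun w => f (permute n pi w)) (words d n)) = Csum (map f (words d n)).
Proof. intros Hp. rewrite <- map_map. apply Csum_perm, permute_words_perm; auto. Qed.

Lemma Rsum_permute d n pi (f : list nat -> R) : is_perm n pi ->
  Rsum (map (fun w => f (permute n pi w)) (words d n)) = Rsum (map f (words d n)).
Proof. intros Hp. rewrite <- map_map. apply Rsum_perm, permute_words_perm; auto. Qed.

Definition transp (j i : nat) : nat -> nat :=
  fun x => if Nat.eq_dec x j then i else if Nat.eq_dec x i then j else x.

Lemma transp_perm n j i : (j < n)%nat -> (i < n)%nat -> is_perm n (transp j i).
Proof.
  intros Hj Hi. split.
  - intros x Hx. unfold transp. destruct (Nat.eq_dec x j), (Nat.eq_dec x i); lia.
  - intros x y Hx Hy. unfold transp.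
    destruct (Nat.eq_dec x j), (Nat.eq_dec x i), (Nat.eq_dec y j), (Nat.eq_dec y i); lia.
Qed.

Definition shiftp (m : nat) (pi : nat -> nat) : nat -> nat :=
  fun i => if Nat.ltb i m then i else (m + pi (i - m))%nat.

Lemma shiftp_perm m k pi : is_perm k pi -> is_perm (m + k) (shiftp m pi).
Proof.
  intros [H1 H2]. split.
  - intros i Hi. unfold shiftp. destruct (Nat.ltb_spec i m). lia. specialize (H1 (i - m)%nat). lia.
  - intros i j Hi Hj. unfold shiftp.
    destruct (Nat.ltb_spec i m), (Nat.ltb_spec j m); intros He; try lia.
    assert (i - m = j - m)%nat by (apply H2; lia). lia.
Qed.

Lemma permute_shiftp m k pi a u : length a = m -> length u = k ->
  permute (m + k) (shiftp m pi) (a ++ u) = a ++ permute k pi u.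
Proof.
  intros Ha Hu. apply nth_ext with (d := 0%nat) (d' := 0%nat).
  { rewrite length_permute, length_app, length_permute; lia. }
  intros i Hi. rewrite length_permute in Hi. rewrite nth_permute by auto. unfold shiftp.
  destruct (Nat.ltb_spec i m).
  - rewrite !app_nth1 by lia. auto.
  - rewrite !app_nth2 by (rewrite Ha; lia). rewrite nth_permute by lia. f_equal. rewrite Ha. lia.
Qed.

(** * Norms, inner products and Cauchy-Schwarz *)

Definition norm2 (d k : nat) (v : vec) : R := Rsum (map (fun w => Cnorm2 (v w)) (words d k)).

Lemma norm2_nonneg d k v : 0 <= norm2 d k v.
Proof. apply Rsum_nonneg; intros; apply Cnorm2_nonneg. Qed.

Lemma inner_self d k v : inner d k v v = RtoC (norm2 d k v).
Proof. unfold inner, norm2. rewrite <- Csum_RtoC. apply Csum_ext; intros. apply Cconj_mul_self. Qed.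

Lemma unit_vec_norm2 d k v : unit_vec d k v -> norm2 d k v = 1.
Proof. unfold unit_vec. rewrite inner_self. intros H. inversion H; auto. Qed.

Lemma Rsum_Cnorm2_zero {A} (f : A -> C) l : Rsum (map (fun x => Cnorm2 (f x)) l) = 0 ->
  forall x, In x l -> f x = C0.
Proof.
  intros H x Hx. apply Cnorm2_zero. apply Rle_antisym; [|apply Cnorm2_nonneg].
  rewrite <- H. apply (Rsum_in (fun x => Cnorm2 (f x))); auto. intros; apply Cnorm2_nonneg.
Qed.

Lemma inner_conj d k u v : Cconj (inner d k u v) = inner d k v u.
Proof.
  unfold inner. rewrite Csum_conj. apply Csum_ext; intros.
  rewrite Cconj_mul, Cconj_conj. apply Cmul_comm.
Qed.

Lemma inner_scal d k a b u v :
  inner d k (fun x => Cmul a (u x)) (fun x => Cmul b (v x)) = Cmul (Cmul (Cconj a) b) (inner d k u v).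
Proof. unfold inner. rewrite <- Csum_scal. apply Csum_ext; intros. rewrite Cconj_mul. Ceq. Qed.

Lemma inner_ext d k u u' v v' : (forall x, In x (words d k) -> u x = u' x) ->
  (forall x, In x (words d k) -> v x = v' x) -> inner d k u v = inner d k u' v'.
Proof. intros H1 H2. unfold inner. apply Csum_ext; intros. rewrite H1, H2; auto. Qed.

Lemma inner_lin_r d k u a b c : inner d k u (fun x => Cadd (a x) (Cmul c (b x))) =
  Cadd (inner d k u a) (Cmul c (inner d k u b)).
Proof. unfold inner. rewrite <- Csum_scal, <- Csum_add. apply Csum_ext; intros. Ceq. Qed.

Lemma inner_lin_l d k y a b c : inner d k (fun x => Cadd (a x) (Cmul c (b x))) y =
  Cadd (inner d k a y) (Cmul (Cconj c) (inner d k b y)).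
Proof. unfold inner. rewrite <- Csum_scal, <- Csum_add. apply Csum_ext; intros. Ceq. Qed.

Definition normalize (d k : nat) (v : vec) : vec :=
  fun x => Cmul (RtoC (/ sqrt (norm2 d k v))) (v x).

Lemma normalize_unit d k v : 0 < norm2 d k v -> unit_vec d k (normalize d k v).
Proof.
  intros Hv. unfold unit_vec, normalize. rewrite inner_scal, inner_self.
  assert (Hs : sqrt (norm2 d k v) * sqrt (norm2 d k v) = norm2 d k v) by (apply sqrt_sqrt; lra).
  assert (0 < sqrt (norm2 d k v)) by (apply sqrt_lt_R0; auto).
  Cunf. simpl. apply injective_projections; simpl; [|ring].
  rewrite <- Hs at 3. field. lra.
Qed.

Lemma inner_normalize d k x v :
  inner d k x (normalize d k v) = Cmul (RtoC (/ sqrt (norm2 d k v))) (inner d k x v).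
Proof. unfold inner, normalize. rewrite <- Csum_scal. apply Csum_ext; intros. Ceq. Qed.

Lemma Cauchy_Schwarz {A} (f g : A -> C) l :
  Cnorm2 (Csum (map (fun a => Cmul (Cconj (f a)) (g a)) l)) <=
  Rsum (map (fun a => Cnorm2 (f a)) l) * Rsum (map (fun a => Cnorm2 (g a)) l).
Proof.
  set (S := Csum (map (fun a => Cmul (Cconj (f a)) (g a)) l)).
  set (Af := Rsum (map (fun a => Cnorm2 (f a)) l)).
  set (Bg := Rsum (map (fun a => Cnorm2 (g a)) l)).
  assert (HA : 0 <= Af) by (apply Rsum_nonneg; intros; apply Cnorm2_nonneg).
  destruct HA as [HA|HA].
  - (* 0 <= ||g - t f||^2 = ||g||^2 - |S|^2 / ||f||^2 for t = S / ||f||^2 *)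
    set (t := Cmul S (RtoC (/ Af))).
    set (h := fun a => Cadd (g a) (Cmul (Copp t) (f a))).
    assert (H0 : 0 <= Rsum (map (fun a => Cnorm2 (h a)) l))
      by (apply Rsum_nonneg; intros; apply Cnorm2_nonneg).
    assert (Hx : RtoC (Rsum (map (fun a => Cnorm2 (h a)) l)) =
       Cadd (Cadd (RtoC Bg) (Cmul (Copp t) (Cconj S)))
            (Cadd (Cmul (Copp (Cconj t)) S) (Cmul (Cmul (Cconj t) t) (RtoC Af)))).
    { unfold Bg, Af. rewrite <- !Csum_RtoC.
      transitivity (Csum (map (fun a => Cadd (Cadd (RtoC (Cnorm2 (g a)))
          (Cmul (Copp t) (Cmul (Cconj (g a)) (f a))))
        (Cadd (Cmul (Copp (Cconj t)) (Cmul (Cconj (f a)) (g a)))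
          (Cmul (Cmul (Cconj t) t) (RtoC (Cnorm2 (f a)))))) l)).
      { apply Csum_ext; intros a _. unfold h, Cnorm2. Ceq. }
      rewrite !Csum_add, !Csum_scal. f_equal. f_equal. f_equal. unfold S. rewrite Csum_conj.
      apply Csum_ext; intros. rewrite Cconj_mul, Cconj_conj; apply Cmul_comm. }
    assert (Hr : Rsum (map (fun a => Cnorm2 (h a)) l) = Bg - Cnorm2 S / Af).
    { change (Rsum (map (fun a => Cnorm2 (h a)) l))
        with (fst (RtoC (Rsum (map (fun a => Cnorm2 (h a)) l)))).
      rewrite Hx. unfold t, Cnorm2. Cunf. simpl. field. lra. }
    rewrite Hr in H0. apply Rmult_le_reg_r with (/ Af). apply Rinv_0_lt_compat; auto.
    replace (Af * Bg * / Af) with Bg by (field; lra). unfold Rdiv in H0. lra.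
  -
    unfold S. rewrite Csum_zero.
    + unfold Cnorm2, C0; simpl. pose proof (Rsum_nonneg (fun a => Cnorm2 (g a)) l). nra.
    + intros a Ha. rewrite (Rsum_Cnorm2_zero f l (eq_sym HA) a Ha). Ceq.
Qed.

Lemma Cauchy_Schwarz_inner d k u v : Cnorm2 (inner d k u v) <= norm2 d k u * norm2 d k v.
Proof. apply Cauchy_Schwarz. Qed.

Lemma tpow_app th a u : tpow th (a ++ u) = Cmul (tpow th a) (tpow th u).
Proof.
  unfold tpow. rewrite map_app. induction (map th a); simpl. rewrite Cmul_1_l; auto.
  rewrite IHl. apply Cmul_assoc.
Qed.

Lemma tpow_unit d k th : unit_vec1 d th -> unit_vec d k (tpow th).
Proof.
  intros H. unfold unit_vec. induction k.
  { unfold inner; simpl. unfold tpow; simpl. Ceq. }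
  unfold inner in *. rewrite Csum_words_S.
  transitivity (Csum (map (fun i => Cmul (Cmul (Cconj (th i)) (th i)) C1) (seq 0 d))).
  - apply Csum_ext; intros. rewrite <- IHk, <- Csum_scal. apply Csum_ext; intros.
    unfold tpow; simpl. rewrite Cconj_mul. Ceq.
  - rewrite Csum_scal_r, Cmul_1_r. apply H.
Qed.

Definition contr (d : nat) (theta : vec1) (m : nat) (Psi : vec) : vec :=
  fun u => Csum (map (fun a => Cmul (Cconj (tpow theta a)) (Psi (a ++ u))) (words d m)).

Lemma inner_tpow_contr d m k Psi th :
  inner d (m + k) Psi (tpow th) = inner d k (contr d th m Psi) (tpow th).
Proof.
  unfold inner, contr. rewrite Csum_words_app.
  transitivity (Csum (map (fun u => Csum (map (fun a => Cmul (Cmul (Cconj (Cconj (tpow th a)))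
    (Cconj (Psi (a ++ u)))) (tpow th u)) (words d m))) (words d k))).
  2: { apply Csum_ext; intros. rewrite Csum_conj, Csum_scal_r. f_equal.
       apply Csum_ext; intros. rewrite Cconj_mul; auto. }
  rewrite Csum_swap. apply Csum_ext; intros. apply Csum_ext; intros.
  rewrite tpow_app, Cconj_conj. Ceq.
Qed.

Lemma inner_contr d m k th x Psi :
  inner d k x (contr d th m Psi) =
  Csum (map (fun a => Cmul (Cconj (tpow th a)) (inner d k x (fun u => Psi (a ++ u)))) (words d m)).
Proof.
  unfold inner, contr.
  transitivity (Csum (map (fun u => Csum (map (fun a => Cmul (Cconj (tpow th a))
    (Cmul (Cconj (x u)) (Psi (a ++ u)))) (words d m))) (words d k))).
  - apply Csum_ext; intros. rewrite <- Csum_scal. apply Csum_ext; intros. Ceq.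
  - rewrite Csum_swap. apply Csum_ext; intros. rewrite Csum_scal; auto.
Qed.

Definition Oadd (A B : op) : op := fun w w' => Cadd (A w w') (B w w').

Lemma qform_add d k A B v : qform d k (Oadd A B) v = Cadd (qform d k A v) (qform d k B v).
Proof.
  unfold qform, Oadd. rewrite <- Csum_add. apply Csum_ext; intros.
  rewrite <- Csum_add. apply Csum_ext; intros. Ceq.
Qed.

Lemma qform_sub d k A B v : qform d k (Osub A B) v = Csub (qform d k A v) (qform d k B v).
Proof.
  unfold qform, Osub.
  transitivity (Csum (map (fun w => Cadd
    (Csum (map (fun w' => Cmul (Cconj (v w)) (Cmul (A w w') (v w'))) (words d k)))
    (Cmul (Copp C1) (Csum (map (fun w' => Cmul (Cconj (v w)) (Cmul (B w w') (v w'))) (words d k)))))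
    (words d k))).
  { apply Csum_ext; intros. rewrite <- Csum_scal, <- Csum_add. apply Csum_ext; intros. Ceq. }
  rewrite Csum_add, Csum_scal. unfold Csub. Ceq.
Qed.

Lemma qform_scale d k a A v : qform d k (Oscale a A) v = Cmul (RtoC a) (qform d k A v).
Proof.
  unfold qform, Oscale. rewrite <- Csum_scal. apply Csum_ext; intros.
  rewrite <- Csum_scal. apply Csum_ext; intros. Ceq.
Qed.

Lemma qform_proj d k y v : qform d k (proj y) v = RtoC (Cnorm2 (inner d k v y)).
Proof.
  rewrite <- Cmul_self_conj. unfold qform, proj. rewrite inner_conj. unfold inner.
  rewrite Csum_mul. apply Csum_ext; intros. apply Csum_ext; intros. Ceq.
Qed.

Lemma qform_ptrace d m k Psi v : qform d k (ptrace d m (proj Psi)) v =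
  RtoC (Rsum (map (fun a => Cnorm2 (inner d k v (fun u => Psi (a ++ u)))) (words d m))).
Proof.
  rewrite <- Csum_RtoC.
  transitivity (Csum (map (fun a => qform d k (proj (fun u => Psi (a ++ u))) v) (words d m))).
  2: apply Csum_ext; intros; apply qform_proj.
  unfold qform, ptrace.
  transitivity (Csum (map (fun w => Csum (map (fun w' => Csum (map (fun a => Cmul (Cconj (v w))
     (Cmul (proj Psi (a ++ w) (a ++ w')) (v w'))) (words d m))) (words d k))) (words d k))).
  { apply Csum_ext; intros. apply Csum_ext; intros. rewrite <- Csum_scal_r, <- Csum_scal.
    apply Csum_ext; intros. Ceq. }
  transitivity (Csum (map (fun w => Csum (map (fun a => Csum (map (fun w' => Cmul (Cconj (v w))
     (Cmul (proj Psi (a ++ w) (a ++ w')) (v w'))) (words d k))) (words d m))) (words d k))).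
  { apply Csum_ext; intros. apply (Csum_swap (fun w' a => Cmul (Cconj (v x))
     (Cmul (proj Psi (a ++ x) (a ++ w')) (v w')))). }
  apply (Csum_swap (fun w a => Csum (map (fun w' => Cmul (Cconj (v w))
     (Cmul (proj Psi (a ++ w) (a ++ w')) (v w'))) (words d k)))).
Qed.

(* Writing v = s u + w with
   s = <u, v> and w orthogonal to u, ||w||^2 = 1 - |s|^2 =: l, the square of the difference
   is l |u><u| + |w><w|, whose square root is B = sqrt l |u><u| + (1/sqrt l) |w><w|,
   of trace 2 sqrt l. *)
Section PureStateDistance.
Variables (d k : nat) (u v : vec).
Hypothesis Hu : inner d k u u = C1.
Hypothesis Hv : inner d k v v = C1.

Let s : C := inner d k u v.
Let w : vec := fun x => Cadd (v x) (Cmul (Copp s) (u x)).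
Let l : R := 1 - Cnorm2 s.
Let lam : R := sqrt l.
Let mu : R := / lam.

Lemma inner_u_w : inner d k u w = C0.
Proof. unfold w. rewrite inner_lin_r, Hu. fold s. Ceq. Qed.

Lemma inner_w_u : inner d k w u = C0.
Proof. rewrite <- inner_conj, inner_u_w. Ceq. Qed.

Lemma inner_w_w : inner d k w w = RtoC l.
Proof.
  unfold w at 1. rewrite inner_lin_l, inner_u_w. unfold w. rewrite inner_lin_r, Hv.
  rewrite <- (inner_conj d k u v). fold s. unfold l, Cnorm2. Ceq.
Qed.

Lemma norm2_w : norm2 d k w = l.
Proof. pose proof inner_w_w as H. rewrite inner_self in H. apply (f_equal fst) in H. exact H. Qed.

Lemma gap_nonneg : 0 <= l.
Proof. rewrite <- norm2_w. apply norm2_nonneg. Qed.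

Definition sqrt_gram : op := Oadd (Oscale lam (proj u)) (Oscale mu (proj w)).

Lemma sqrt_gram_psd : psd d k sqrt_gram.
Proof.
  intros x. unfold sqrt_gram. rewrite qform_add, !qform_scale, !qform_proj.
  pose proof (Cnorm2_nonneg (inner d k x u)). pose proof (Cnorm2_nonneg (inner d k x w)).
  assert (0 <= lam) by apply sqrt_pos.
  assert (0 <= mu) by (unfold mu; destruct (Req_dec lam 0) as [->|];
    [rewrite Rinv_0; lra | left; apply Rinv_0_lt_compat; lra]).
  unfold Cim, Cre; simpl. split; [ring|nra].
Qed.

Lemma sqrt_gram_trace : Cre (Otrace d k sqrt_gram) = 2 * lam.
Proof.
  assert (Hmu : mu * l = lam).
  { unfold mu, lam. pose proof gap_nonneg as H0. destruct H0 as [H0|H0].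
    - rewrite <- (sqrt_sqrt l) at 2 by lra. field. apply Rgt_not_eq, sqrt_lt_R0; auto.
    - rewrite <- H0, sqrt_0, Rinv_0; ring. }
  transitivity (Cre (Cadd (Cmul (RtoC lam) (inner d k u u)) (Cmul (RtoC mu) (inner d k w w)))).
  - f_equal. unfold Otrace, sqrt_gram, Oadd, Oscale, proj, inner.
    rewrite <- !Csum_scal, <- Csum_add. apply Csum_ext; intros. Ceq.
  - rewrite Hu, inner_w_w. unfold Cre, RtoC, Cmul, Cadd, C1; simpl. rewrite Hmu. ring.
Qed.

(* Entrywise, both B^2 and (|u><u| - |v><v|)^2 are combinations of the Gram entries. *)
Lemma sqrt_gram_square :
  Oeq d k (Omul d k sqrt_gram sqrt_gram)
    (Omul d k (Oadj (Osub (proj u) (proj v))) (Osub (proj u) (proj v))).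
Proof.
  intros x y Hx Hy. unfold Omul, sqrt_gram, Oadd, Oscale, Oadj, Osub, proj, Csub.
  transitivity (Cadd (Cadd (Cmul (Cmul (RtoC (lam * lam)) (Cmul (u x) (Cconj (u y)))) (inner d k u u))
     (Cmul (Cmul (RtoC (lam * mu)) (Cmul (u x) (Cconj (w y)))) (inner d k u w)))
     (Cadd (Cmul (Cmul (RtoC (mu * lam)) (Cmul (w x) (Cconj (u y)))) (inner d k w u))
     (Cmul (Cmul (RtoC (mu * mu)) (Cmul (w x) (Cconj (w y)))) (inner d k w w)))).
  { unfold inner. rewrite <- !Csum_scal, <- !Csum_add. apply Csum_ext; intros z _. Ceq. }
  transitivity (Cadd (Cadd (Cmul (Cmul (u x) (Cconj (u y))) (inner d k u u))
     (Cmul (Copp (Cmul (u x) (Cconj (v y)))) (inner d k u v)))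
     (Cadd (Cmul (Copp (Cmul (v x) (Cconj (u y)))) (inner d k v u))
     (Cmul (Cmul (v x) (Cconj (v y))) (inner d k v v)))).
  2: { unfold inner. rewrite <- !Csum_scal, <- !Csum_add. apply Csum_ext; intros z _. Ceq. }
  rewrite <- (inner_conj d k u v), Hu, Hv, inner_u_w, inner_w_u, inner_w_w. fold s.
  assert (Hlam : lam * lam = l) by (apply sqrt_sqrt, gap_nonneg).
  destruct gap_nonneg as [Hp|Hz].
  - replace (mu * mu) with (/ l) by (unfold mu, lam; rewrite <- Rinv_mult, sqrt_sqrt; lra).
    rewrite Hlam. unfold w, l, Cnorm2 in *. Cunf. simpl.
    apply injective_projections; simpl; field; lra.
  - (* w = 0, so v = s u *)
    assert (Hw0 : forall z, In z (words d k) -> w z = C0).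
    { apply Rsum_Cnorm2_zero. pose proof norm2_w as H. unfold norm2 in H. lra. }
    assert (Hvs : forall z, In z (words d k) -> v z = Cmul s (u z)).
    { intros z Hzw. pose proof (Hw0 z Hzw) as H. unfold w in H. Cunf.
      destruct (v z), (u z), s. simpl in *. inversion H. apply injective_projections; simpl; lra. }
    rewrite (Hw0 x Hx), (Hw0 y Hy), (Hvs x Hx), (Hvs y Hy), Hlam. unfold l, Cnorm2 in *. Cunf. simpl.
    apply injective_projections; simpl; nra.
Qed.

Lemma trnorm_pure : is_trnorm d k (Osub (proj u) (proj v)) (2 * sqrt (1 - Cnorm2 (inner d k u v))).
Proof.
  exists sqrt_gram. split; [apply sqrt_gram_psd | split; [apply sqrt_gram_square|]].
  rewrite sqrt_gram_trace. reflexivity.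
Qed.
End PureStateDistance.

(** * Tensor powers of a unitary *)

Definition e0 : vec1 := fun i => if Nat.eq_dec i 0 then C1 else C0.

Lemma tpow_e0 d a : In a (words d (length a)) -> tpow e0 a = wdelta (repeat 0%nat (length a)) a.
Proof.
  induction a as [|x a IHa]; simpl; intros H. unfold wdelta; simpl; auto.
  assert (Ha : In a (words d (length a))).
  { change (In (x :: a) (words d (length (x :: a)))) in H.
    apply words_In in H. apply words_In. simpl in H. split; auto. intros; apply H; auto. }
  unfold tpow in *. simpl. rewrite IHa by exact Ha. unfold e0, wdelta.
  destruct (list_eq_dec Nat.eq_dec (repeat 0%nat (length a)) a) as [E1|E1];
  destruct (list_eq_dec Nat.eq_dec (0%nat :: repeat 0%nat (length a)) (x :: a)) as [E2|E2];
  destruct (Nat.eq_dec x 0) as [E3|E3]; try Ceq; try (inversion E2; congruence).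
  subst. rewrite E1 in E2. congruence.
Qed.

Section TensorPower.
Variable d : nat.
Variable U : nat -> nat -> C.
Variable theta : vec1.
Hypothesis Ucol : forall j j', (j < d)%nat -> (j' < d)%nat ->
  Csum (map (fun i => Cmul (Cconj (U i j)) (U i j')) (seq 0 d)) = if Nat.eq_dec j j' then C1 else C0.
Hypothesis Urow : forall i i', (i < d)%nat -> (i' < d)%nat ->
  Csum (map (fun j => Cmul (U i j) (Cconj (U i' j))) (seq 0 d)) = if Nat.eq_dec i i' then C1 else C0.
Hypothesis U0 : forall j, (j < d)%nat -> Cconj (U 0 j) = theta j.

Fixpoint Uentry (w x : list nat) : C :=
  match w, x with i :: w', j :: x' => Cmul (U i j) (Uentry w' x') | _, _ => C1 end.

Definition Upow (k : nat) (v : vec) : vec :=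
  fun w => Csum (map (fun x => Cmul (Uentry w x) (v x)) (words d k)).
Definition Upow_adj (k : nat) (v : vec) : vec :=
  fun z => Csum (map (fun w => Cmul (Cconj (Uentry w z)) (v w)) (words d k)).

Lemma Uentry_col k x y : In x (words d k) -> In y (words d k) ->
  Csum (map (fun w => Cmul (Cconj (Uentry w x)) (Uentry w y)) (words d k)) = wdelta x y.
Proof.
  revert x y; induction k; intros x y Hx Hy.
  - simpl in Hx, Hy. destruct Hx as [<-|[]]; destruct Hy as [<-|[]]. simpl. unfold wdelta; simpl. Ceq.
  - apply words_In in Hx, Hy. destruct x as [|a x], y as [|b y]; simpl in Hx, Hy; try (exfalso; lia).
    destruct Hx as [Hx Hax], Hy as [Hy Hby].
    assert (Hxw : In x (words d k)) by (apply words_In; split; auto; lia).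
    assert (Hyw : In y (words d k)) by (apply words_In; split; auto; lia).
    rewrite Csum_words_S. simpl Uentry.
    transitivity (Csum (map (fun i => Cmul (Cmul (Cconj (U i a)) (U i b))
        (Csum (map (fun w => Cmul (Cconj (Uentry w x)) (Uentry w y)) (words d k)))) (seq 0 d))).
    { apply Csum_ext; intros i _. rewrite <- Csum_scal. apply Csum_ext; intros w _.
      rewrite Cconj_mul. Ceq. }
    rewrite IHk, Csum_scal_r, Ucol; auto.
    unfold wdelta. destruct (Nat.eq_dec a b), (list_eq_dec Nat.eq_dec x y),
      (list_eq_dec Nat.eq_dec (a::x) (b::y)); subst; try congruence; Ceq.
Qed.

Lemma Uentry_row k w w' : In w (words d k) -> In w' (words d k) ->
  Csum (map (fun x => Cmul (Uentry w x) (Cconj (Uentry w' x))) (words d k)) = wdelta w w'.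
Proof.
  revert w w'; induction k; intros x y Hx Hy.
  - simpl in Hx, Hy. destruct Hx as [<-|[]]; destruct Hy as [<-|[]]. simpl. unfold wdelta; simpl. Ceq.
  - apply words_In in Hx, Hy. destruct x as [|a x], y as [|b y]; simpl in Hx, Hy; try (exfalso; lia).
    destruct Hx as [Hx Hax], Hy as [Hy Hby].
    assert (Hxw : In x (words d k)) by (apply words_In; split; auto; lia).
    assert (Hyw : In y (words d k)) by (apply words_In; split; auto; lia).
    rewrite Csum_words_S. simpl Uentry.
    transitivity (Csum (map (fun i => Cmul (Cmul (U a i) (Cconj (U b i)))
        (Csum (map (fun w => Cmul (Uentry x w) (Cconj (Uentry y w))) (words d k)))) (seq 0 d))).
    { apply Csum_ext; intros i _. rewrite <- Csum_scal. apply Csum_ext; intros w _.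
      rewrite Cconj_mul. Ceq. }
    rewrite IHk, Csum_scal_r, Urow; auto.
    unfold wdelta. destruct (Nat.eq_dec a b), (list_eq_dec Nat.eq_dec x y),
      (list_eq_dec Nat.eq_dec (a::x) (b::y)); subst; try congruence; Ceq.
Qed.

Lemma inner_Upow k u v : inner d k (Upow k u) (Upow k v) = inner d k u v.
Proof.
  unfold inner, Upow.
  transitivity (Csum (map (fun w => Csum (map (fun x => Csum (map (fun y =>
     Cmul (Cmul (Cconj (u x)) (v y)) (Cmul (Cconj (Uentry w x)) (Uentry w y))) (words d k)))
     (words d k))) (words d k))).
  { apply Csum_ext; intros w _. rewrite Csum_conj, Csum_mul. apply Csum_ext; intros x _.
    apply Csum_ext; intros y _. rewrite Cconj_mul; Ceq. }
  rewrite Csum_swap. apply Csum_ext; intros x Hx. rewrite Csum_swap.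
  transitivity (Csum (map (fun y => Cmul (Cmul (Cconj (u x)) (v y)) (wdelta x y)) (words d k))).
  { apply Csum_ext; intros y Hy. rewrite Csum_scal, Uentry_col; auto. }
  rewrite Csum_wdelta_l; auto.
Qed.

Lemma inner_Upow_adj k u v : inner d k (Upow_adj k u) (Upow_adj k v) = inner d k u v.
Proof.
  unfold inner, Upow_adj.
  transitivity (Csum (map (fun w => Csum (map (fun x => Csum (map (fun y =>
     Cmul (Cmul (Cconj (u x)) (v y)) (Cmul (Uentry x w) (Cconj (Uentry y w)))) (words d k)))
     (words d k))) (words d k))).
  { apply Csum_ext; intros w _. rewrite Csum_conj, Csum_mul. apply Csum_ext; intros x _.
    apply Csum_ext; intros y _. rewrite Cconj_mul, Cconj_conj; Ceq. }
  rewrite Csum_swap. apply Csum_ext; intros x Hx. rewrite Csum_swap.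
  transitivity (Csum (map (fun y => Cmul (Cmul (Cconj (u x)) (v y)) (wdelta x y)) (words d k))).
  { apply Csum_ext; intros y Hy. rewrite Csum_scal, Uentry_row; auto. }
  rewrite Csum_wdelta_l; auto.
Qed.

Lemma norm2_Upow k v : norm2 d k (Upow k v) = norm2 d k v.
Proof.
  pose proof (inner_Upow k v v) as H. rewrite !inner_self in H.
  apply (f_equal fst) in H. exact H.
Qed.

Lemma norm2_Upow_adj k v : norm2 d k (Upow_adj k v) = norm2 d k v.
Proof.
  pose proof (inner_Upow_adj k v v) as H. rewrite !inner_self in H.
  apply (f_equal fst) in H. exact H.
Qed.

Lemma inner_adj k u v : inner d k u (Upow_adj k v) = inner d k (Upow k u) v.
Proof.
  unfold inner, Upow_adj, Upow.
  transitivity (Csum (map (fun z => Csum (map (fun w =>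
    Cmul (Cconj (u z)) (Cmul (Cconj (Uentry w z)) (v w))) (words d k))) (words d k))).
  { apply Csum_ext; intros; rewrite Csum_scal; auto. }
  rewrite Csum_swap. apply Csum_ext; intros w _. rewrite Csum_conj, <- Csum_scal_r.
  apply Csum_ext; intros z _. rewrite Cconj_mul; Ceq.
Qed.

Lemma Upow_adj_ext k u v : (forall w, In w (words d k) -> u w = v w) ->
  forall w, Upow_adj k u w = Upow_adj k v w.
Proof. intros H w. unfold Upow_adj. apply Csum_ext; intros. rewrite H; auto. Qed.

Lemma Uentry_app a b u x : length a = length b ->
  Uentry (a ++ u) (b ++ x) = Cmul (Uentry a b) (Uentry u x).
Proof.
  revert b; induction a; destruct b; simpl; intros; try discriminate. rewrite Cmul_1_l; auto.
  rewrite IHa; auto. apply Cmul_assoc.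
Qed.

Lemma Uentry_prod w x : length w = length x ->
  Uentry w x = Cprod (map (fun i => U (nth i w 0%nat) (nth i x 0%nat)) (seq 0 (length w))).
Proof.
  revert x; induction w; destruct x; simpl; intros; try discriminate; auto.
  rewrite IHw by lia. f_equal. rewrite <- seq_shift, map_map. auto.
Qed.

Lemma Cprod_perm (l l' : list C) : Permutation l l' -> Cprod l = Cprod l'.
Proof.
  induction 1; simpl; auto. rewrite IHPermutation; auto.
  rewrite !Cmul_assoc, (Cmul_comm y); auto. congruence.
Qed.

Lemma Uentry_permute n pi w x : is_perm n pi -> length w = n -> length x = n ->
  Uentry (permute n pi w) (permute n pi x) = Uentry w x.
Proof.
  intros Hp Hw Hx. rewrite !Uentry_prod by (rewrite ?length_permute; congruence).
  rewrite length_permute, Hw.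
  transitivity (Cprod (map (fun i => U (nth i w 0%nat) (nth i x 0%nat)) (map pi (seq 0 n)))).
  { rewrite map_map. f_equal. apply map_ext_in. intros i Hi. apply in_seq in Hi.
    rewrite !nth_permute by lia. auto. }
  apply Cprod_perm, Permutation_map, perm_list; auto.
Qed.

Lemma Upow_symmetric n v : symmetric d n v -> symmetric d n (Upow n v).
Proof.
  intros Hs pi Hp w Hw. unfold Pperm, Upow. rewrite <- (Csum_permute d n pi _ Hp).
  apply Csum_ext; intros x Hx. rewrite Uentry_permute; eauto using words_length, permute_words.
  f_equal. apply Hs; auto.
Qed.

Lemma Upow_adj_Pperm n pi v w : is_perm n pi -> In w (words d n) ->
  Upow_adj n (Pperm n pi v) w = Pperm n pi (Upow_adj n v) w.
Proof.
  intros Hp Hw. unfold Upow_adj, Pperm. symmetry. rewrite <- (Csum_permute d n pi _ Hp).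
  apply Csum_ext; intros x Hx. rewrite Uentry_permute; eauto using words_length.
Qed.

Lemma Upow_adj_symmetric n v : symmetric d n v -> symmetric d n (Upow_adj n v).
Proof.
  intros Hs pi Hp w Hw. rewrite <- Upow_adj_Pperm; auto. apply Upow_adj_ext.
  intros; apply Hs; auto.
Qed.

Lemma Uentry_zeros z : (forall a, In a z -> (a < d)%nat) ->
  Cconj (Uentry (repeat 0%nat (length z)) z) = tpow theta z.
Proof.
  induction z; simpl; intros. Ceq.
  unfold tpow in *; simpl. rewrite Cconj_mul, U0, IHz; auto.
Qed.

Lemma Upow_adj_tpow_tensor k j psi z : (0 < d)%nat -> (j <= k)%nat -> In z (words d k) ->
  Upow_adj k (tpow_tensor j e0 psi) z = tpow_tensor j theta (Upow_adj (k - j) psi) z.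
Proof.
  intros Hd Hj Hz. unfold Upow_adj, tpow_tensor.
  replace k with (j + (k - j))%nat at 1 by lia. rewrite Csum_words_app.
  apply words_In in Hz. destruct Hz as [Hzl Hza].
  transitivity (Csum (map (fun a => Cmul (Cmul (Cconj (Uentry a (firstn j z))) (tpow e0 a))
     (Csum (map (fun u => Cmul (Cconj (Uentry u (skipn j z))) (psi u)) (words d (k - j)))))
     (words d j))).
  { apply Csum_ext; intros a Ha. rewrite <- Csum_scal. apply Csum_ext; intros u Hu.
    pose proof (words_length _ _ _ Ha) as Hal.
    rewrite <- (firstn_skipn j z) at 1.
    rewrite Uentry_app by (rewrite length_firstn; lia).
    rewrite firstn_app, Hal, Nat.sub_diag, firstn_O, app_nil_r, (firstn_all2 a) by lia.
    rewrite skipn_app, Hal, Nat.sub_diag, skipn_O, (skipn_all2 a) by lia. simpl app.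
    rewrite Cconj_mul. unfold tpow. Ceq. }
  rewrite Csum_scal_r. f_equal.
  transitivity (Csum (map (fun a => Cmul (Cconj (Uentry a (firstn j z)))
    (wdelta a (repeat 0%nat j))) (words d j))).
  { apply Csum_ext; intros a Ha. pose proof (words_length _ _ _ Ha) as Hal.
    rewrite (tpow_e0 d) by (rewrite Hal; auto). subst j. unfold wdelta.
    destruct (list_eq_dec Nat.eq_dec), (list_eq_dec Nat.eq_dec); subst; congruence. }
  rewrite Csum_wdelta by (apply repeat_words; auto).
  replace j with (length (firstn j z)) at 1 by (rewrite length_firstn; lia).
  rewrite Uentry_zeros. auto.
  intros a Ha. apply Hza. rewrite <- (firstn_skipn j z). apply in_or_app; left; auto.
Qed.

Lemma Upow_adj_tpow k z : (0 < d)%nat -> In z (words d k) -> Upow_adj k (tpow e0) z = tpow theta z.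
Proof.
  intros Hd Hz. pose proof (words_length _ _ _ Hz) as Hl.
  transitivity (Upow_adj k (tpow_tensor k e0 (fun _ => C1)) z).
  { apply Upow_adj_ext. intros w Hw. pose proof (words_length _ _ _ Hw).
    unfold tpow_tensor. rewrite firstn_all2, Cmul_1_r by lia. auto. }
  rewrite Upow_adj_tpow_tensor by (auto; lia).
  unfold tpow_tensor. rewrite firstn_all2 by lia. rewrite Nat.sub_diag.
  unfold Upow_adj; simpl. unfold tpow. Ceq.
Qed.

Lemma Upow_contr m k Psi u : In u (words d k) ->
  Upow k (contr d theta m Psi) u = Upow (m + k) Psi (repeat 0%nat m ++ u).
Proof.
  intros Hu. unfold Upow, contr. rewrite Csum_words_app.
  transitivity (Csum (map (fun x => Csum (map (fun a => Cmul (Cconj (tpow theta a))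
    (Cmul (Uentry u x) (Psi (a ++ x)))) (words d m))) (words d k))).
  { apply Csum_ext; intros x _. rewrite Cmul_comm, <- Csum_scal_r. apply Csum_ext; intros; Ceq. }
  rewrite Csum_swap. apply Csum_ext; intros a Ha. apply Csum_ext; intros x Hx.
  pose proof (words_length _ _ _ Ha) as Hal.
  rewrite Uentry_app by (rewrite repeat_length; auto).
  replace (Cconj (tpow theta a)) with (Uentry (repeat 0%nat m) a). Ceq.
  rewrite <- Hal, <- Uentry_zeros, Cconj_conj; auto.
  apply words_In in Ha; tauto.
Qed.

End TensorPower.

(** * A Householder unitary with U^* e_0 = theta *)

Definition ndelta (i j : nat) : C := if Nat.eq_dec i j then C1 else C0.

Lemma Csum_ndelta d (f : nat -> C) j : (j < d)%nat ->
  Csum (map (fun i => Cmul (f i) (ndelta i j)) (seq 0 d)) = f j.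
Proof.
  intros Hj. rewrite <- (Csum_delta Nat.eq_dec f (seq 0 d) j (seq_NoDup d 0)) by (apply in_seq; lia).
  apply Csum_ext; intros. unfold ndelta. destruct (Nat.eq_dec x j). apply Cmul_1_r. apply Cmul_0_r.
Qed.

Lemma Csum_ndelta1 d j : (j < d)%nat -> Csum (map (fun i => ndelta i j) (seq 0 d)) = C1.
Proof.
  intros Hj. rewrite <- (Csum_ndelta d (fun _ => C1) j Hj). apply Csum_ext; intros.
  rewrite Cmul_1_l; auto.
Qed.

Lemma ndelta_sym i j : ndelta i j = ndelta j i.
Proof. unfold ndelta. destruct (Nat.eq_dec i j), (Nat.eq_dec j i); congruence. Qed.

Lemma Cconj_ndelta i j : Cconj (ndelta i j) = ndelta j i.
Proof. unfold ndelta. destruct (Nat.eq_dec i j), (Nat.eq_dec j i); try congruence; Ceq. Qed.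

(* With phase = theta_0 / |theta_0| (or 1 if theta_0 = 0) and h = theta - phase e_0, the
   matrix U = conj(phase) (1 - 2 h h^* / ||h||^2) is unitary and its first row is
   conj(theta); we have ||h||^2 = 2 - 2 |theta_0|. *)
Section Householder.
Variable d : nat.
Variable theta : vec1.
Hypothesis Hd : (0 < d)%nat.
Hypothesis Hth : unit_vec1 d theta.

Definition theta0 : C := theta 0%nat.
Definition mod0 : R := sqrt (Cnorm2 theta0).
Definition phase : C := if Req_EM_T mod0 0 then C1 else (fst theta0 / mod0, snd theta0 / mod0).
Definition hvec (j : nat) : C := Cadd (theta j) (Cmul (Copp phase) (ndelta j 0)).
Definition hnorm2 : R := Rsum (map (fun j => Cnorm2 (hvec j)) (seq 0 d)).
Definition hcoef : R := 2 * / hnorm2.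
Definition householder (i j : nat) : C :=
  Cmul (Cconj phase) (Cadd (ndelta i j) (Cmul (RtoC (- hcoef)) (Cmul (hvec i) (Cconj (hvec j))))).

Lemma mod0_sq : mod0 * mod0 = Cnorm2 theta0.
Proof. unfold mod0. apply sqrt_sqrt, Cnorm2_nonneg. Qed.

Lemma phase_unit : Cmul (Cconj phase) phase = C1.
Proof.
  unfold phase. destruct (Req_EM_T mod0 0) as [|Hm]. Ceq.
  pose proof mod0_sq as H. unfold Cnorm2 in H.
  Cunf. simpl. apply injective_projections; simpl; [|field; auto].
  replace (fst theta0 / mod0 * (fst theta0 / mod0) - - (snd theta0 / mod0) * (snd theta0 / mod0))
    with ((fst theta0 * fst theta0 + snd theta0 * snd theta0) / (mod0 * mod0)) by (field; auto).
  rewrite <- H. field. intro H'. apply Hm. nra.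
Qed.

Lemma phase_theta0 : Cmul (Cconj theta0) phase = RtoC mod0.
Proof.
  unfold phase. pose proof mod0_sq as H. destruct (Req_EM_T mod0 0) as [Hm|Hm].
  - rewrite Hm in *. rewrite (Cnorm2_zero theta0) by lra. Ceq.
  - unfold Cnorm2 in H. Cunf. simpl. apply injective_projections; simpl.
    + replace (fst theta0 * (fst theta0 / mod0) - - snd theta0 * (snd theta0 / mod0))
        with ((fst theta0 * fst theta0 + snd theta0 * snd theta0) / mod0) by (field; auto).
      rewrite <- H. field; auto.
    + field; auto.
Qed.

Lemma hnorm2_val : hnorm2 = 2 - 2 * mod0.
Proof.
  assert (H : RtoC hnorm2 = RtoC (2 - 2 * mod0)); [|inversion H; auto].
  unfold hnorm2. rewrite <- Csum_RtoC.
  transitivity (Csum (map (fun j => Cadd (Cadd (Cmul (Cconj (theta j)) (theta j))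
     (Cmul (Copp phase) (Cmul (Cconj (theta j)) (ndelta j 0))))
     (Cadd (Cmul (Copp (Cconj phase)) (Cmul (theta j) (ndelta j 0)))
       (Cmul (Cmul (Cconj phase) phase) (Cmul C1 (ndelta j 0))))) (seq 0 d))).
  { apply Csum_ext; intros j _. rewrite <- Cconj_mul_self. unfold hvec.
    unfold ndelta; destruct (Nat.eq_dec j 0); Ceq. }
  rewrite !Csum_add, !Csum_scal, Csum_ndelta1 by auto.
  rewrite (Csum_ndelta d (fun j => Cconj (theta j)) 0), (Csum_ndelta d theta 0) by auto.
  unfold unit_vec1, inner1 in Hth. rewrite Hth, phase_unit. fold theta0.
  assert (H : Cmul (Cconj phase) theta0 = RtoC mod0).
  { rewrite <- (Cconj_conj theta0), <- Cconj_mul, Cmul_comm, phase_theta0. Ceq. }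
  replace (Cmul (Copp phase) (Cconj theta0)) with (Copp (Cmul (Cconj theta0) phase)) by Ceq.
  replace (Cmul (Copp (Cconj phase)) theta0) with (Copp (Cmul (Cconj phase) theta0)) by Ceq.
  rewrite phase_theta0, H. Ceq.
Qed.

Lemma hcoef_sq : hcoef * hcoef * hnorm2 = 2 * hcoef.
Proof. unfold hcoef. destruct (Req_EM_T hnorm2 0) as [->|]. rewrite Rinv_0. ring. field; auto. Qed.

Lemma sum_hvec_sq : Csum (map (fun i => Cmul (Cconj (hvec i)) (hvec i)) (seq 0 d)) = RtoC hnorm2.
Proof. unfold hnorm2. rewrite <- Csum_RtoC. apply Csum_ext; intros. apply Cconj_mul_self. Qed.

Lemma householder_col j j' : (j < d)%nat -> (j' < d)%nat ->
  Csum (map (fun i => Cmul (Cconj (householder i j)) (householder i j')) (seq 0 d)) =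
  if Nat.eq_dec j j' then C1 else C0.
Proof.
  intros Hj Hj'.
  transitivity (Csum (map (fun i => Cadd (Cadd (Cmul (ndelta i j') (ndelta i j))
     (Cmul (Cmul (RtoC (-hcoef)) (Cconj (hvec j'))) (Cmul (hvec i) (ndelta i j))))
     (Cadd (Cmul (Cmul (RtoC (-hcoef)) (hvec j)) (Cmul (Cconj (hvec i)) (ndelta i j')))
     (Cmul (Cmul (RtoC (hcoef * hcoef)) (Cmul (hvec j) (Cconj (hvec j'))))
       (Cmul (Cconj (hvec i)) (hvec i))))) (seq 0 d))).
  { apply Csum_ext; intros i _. unfold householder. rewrite Cconj_mul, Cconj_conj.
    match goal with |- Cmul (Cmul phase ?X) (Cmul (Cconj phase) ?Y) = _ =>
      replace (Cmul (Cmul phase X) (Cmul (Cconj phase) Y))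
        with (Cmul (Cmul (Cconj phase) phase) (Cmul X Y)) by Ceq end.
    rewrite phase_unit, Cmul_1_l, Cconj_add, !Cconj_mul, Cconj_conj, Cconj_RtoC, Cconj_ndelta.
    rewrite (ndelta_sym j i). Ceq. }
  rewrite !Csum_add, !Csum_scal, !Csum_ndelta, sum_hvec_sq by auto.
  match goal with |- Cadd (Cadd ?D _) _ = _ =>
    transitivity (Cadd D (Cmul (RtoC (hcoef * hcoef * hnorm2 - 2 * hcoef))
      (Cmul (hvec j) (Cconj (hvec j'))))) end.
  { Ceq. }
  rewrite hcoef_sq. unfold ndelta. destruct (Nat.eq_dec j j'); Ceq.
Qed.

Lemma householder_row i i' : (i < d)%nat -> (i' < d)%nat ->
  Csum (map (fun j => Cmul (householder i j) (Cconj (householder i' j))) (seq 0 d)) =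
  if Nat.eq_dec i i' then C1 else C0.
Proof.
  intros Hi Hi'.
  transitivity (Csum (map (fun j => Cadd (Cadd (Cmul (ndelta j i) (ndelta j i'))
     (Cmul (Cmul (RtoC (-hcoef)) (hvec i)) (Cmul (Cconj (hvec j)) (ndelta j i'))))
     (Cadd (Cmul (Cmul (RtoC (-hcoef)) (Cconj (hvec i'))) (Cmul (hvec j) (ndelta j i)))
     (Cmul (Cmul (RtoC (hcoef * hcoef)) (Cmul (hvec i) (Cconj (hvec i'))))
       (Cmul (Cconj (hvec j)) (hvec j))))) (seq 0 d))).
  { apply Csum_ext; intros j _. unfold householder. rewrite Cconj_mul, Cconj_conj.
    match goal with |- Cmul (Cmul (Cconj phase) ?X) (Cmul phase ?Y) = _ =>
      replace (Cmul (Cmul (Cconj phase) X) (Cmul phase Y))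
        with (Cmul (Cmul (Cconj phase) phase) (Cmul X Y)) by Ceq end.
    rewrite phase_unit, Cmul_1_l, Cconj_add, !Cconj_mul, Cconj_conj, Cconj_RtoC, Cconj_ndelta.
    rewrite (ndelta_sym i j). Ceq. }
  rewrite !Csum_add, !Csum_scal, !Csum_ndelta, sum_hvec_sq by auto.
  match goal with |- Cadd (Cadd ?D _) _ = _ =>
    transitivity (Cadd D (Cmul (RtoC (hcoef * hcoef * hnorm2 - 2 * hcoef))
      (Cmul (hvec i) (Cconj (hvec i'))))) end.
  { Ceq. }
  rewrite hcoef_sq. unfold ndelta. destruct (Nat.eq_dec i' i), (Nat.eq_dec i i'); try lia; Ceq.
Qed.

Lemma householder_0 j : (j < d)%nat -> Cconj (householder 0 j) = theta j.
Proof.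
  intros Hj. unfold householder.
  rewrite !Cconj_mul, Cconj_add, !Cconj_mul, Cconj_conj, Cconj_RtoC, Cconj_conj, Cconj_ndelta.
  assert (Eth : theta j = Cadd (hvec j) (Cmul phase (ndelta j 0))) by (unfold hvec; Ceq).
  destruct (Req_EM_T hnorm2 0) as [Hn|Hn].
  - (* h = 0: theta = phase e_0 *)
    assert (Hx0 : forall i, (i < d)%nat -> hvec i = C0).
    { intros i Hi. apply (Rsum_Cnorm2_zero hvec (seq 0 d)); auto. apply in_seq; lia. }
    rewrite Eth, (Hx0 0%nat Hd), (Hx0 j Hj). Ceq.
  -
    assert (Hx0 : Cmul (Cmul (Cconj (hvec 0)) phase) (RtoC hcoef) = Copp C1).
    { unfold hvec, ndelta. destruct (Nat.eq_dec 0 0); [|lia]. fold theta0.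
      rewrite Cconj_add, Cmul_add_distr_r, phase_theta0.
      replace (Cmul (Cconj (Cmul (Copp phase) C1)) phase)
        with (Copp (Cmul (Cconj phase) phase)) by Ceq.
      rewrite phase_unit. unfold hcoef. rewrite hnorm2_val in *. Cunf. simpl.
      apply injective_projections; simpl; field; lra. }
    transitivity (Cadd (Cmul phase (ndelta j 0))
      (Cmul (Copp (Cmul (Cmul (Cconj (hvec 0)) phase) (RtoC hcoef))) (hvec j))).
    { Ceq. }
    rewrite Hx0, Eth. Ceq.
Qed.
End Householder.

(** * Counting nonzero letters *)

Definition isz (a : nat) : bool := Nat.eqb a 0.
Definition nnz (w : list nat) : nat := length (filter (fun a => negb (isz a)) w).
Definition nzeros (w : list nat) : nat := length (filter isz w).

Lemma nnz_nzeros w : (nnz w + nzeros w)%nat = length w.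
Proof. unfold nnz, nzeros; induction w; simpl; auto. destruct (isz a); simpl; lia. Qed.
Lemma nnz_app a b : nnz (a ++ b) = (nnz a + nnz b)%nat.
Proof. unfold nnz. rewrite filter_app, length_app; auto. Qed.
Lemma nnz_perm a b : Permutation a b -> nnz a = nnz b.
Proof.
  unfold nnz; induction 1; simpl; auto.
  - destruct (negb (isz x)); simpl; auto.
  - destruct (negb (isz x)), (negb (isz y)); simpl; auto.
  - congruence.
Qed.
Lemma nnz_zeros m : nnz (repeat 0%nat m) = 0%nat.
Proof. induction m; simpl; auto. Qed.

Definition zero_prefix (j : nat) (w : list nat) : bool :=
  forallb (fun i => isz (nth i w 0%nat)) (seq 0 j).

Lemma forallb_ext_in {A} (f g : A -> bool) l :
  (forall x, In x l -> f x = g x) -> forallb f l = forallb g l.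
Proof. induction l; simpl; intros; auto. rewrite H, IHl; auto. Qed.

Lemma zero_prefix_S j w : zero_prefix (S j) w = zero_prefix j w && isz (nth j w 0%nat).
Proof. unfold zero_prefix. rewrite seq_S, forallb_app. simpl. rewrite andb_true_r; auto. Qed.

Lemma zero_prefix_firstn j w : zero_prefix j w = true -> (j <= length w)%nat ->
  firstn j w = repeat 0%nat j.
Proof.
  intros H Hl. unfold zero_prefix in H. rewrite forallb_forall in H.
  apply nth_ext with (d := 0%nat) (d' := 0%nat). rewrite length_firstn, repeat_length; lia.
  intros i Hi. rewrite length_firstn in Hi. rewrite nth_firstn.
  destruct (Nat.ltb_spec i j); [|lia]. rewrite nth_repeat.
  specialize (H i). unfold isz in H. apply Nat.eqb_eq. apply H. apply in_seq; lia.
Qed.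

Lemma zero_prefix_app a u : zero_prefix (length a) (a ++ u) = zero_prefix (length a) a.
Proof.
  unfold zero_prefix. apply forallb_ext_in. intros i Hi. apply in_seq in Hi.
  rewrite app_nth1 by lia. auto.
Qed.

Lemma zero_prefix_words d m a : In a (words d m) -> zero_prefix m a = true -> a = repeat 0%nat m.
Proof.
  intros Ha Hf. pose proof (words_length _ _ _ Ha) as Hl.
  rewrite <- (firstn_all2 (n := m) a) by lia. apply zero_prefix_firstn; auto; lia.
Qed.

Lemma zero_prefix_repeat m : zero_prefix m (repeat 0%nat m) = true.
Proof.
  unfold zero_prefix. apply forallb_forall. intros i Hi. apply in_seq in Hi.
  rewrite nth_repeat. auto.
Qed.

Lemma nzeros_skipn w j : INR (nzeros (skipn j w)) =
  Rsum (map (fun i => if isz (nth i w 0%nat) then 1 else 0) (seq j (length w - j))).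
Proof.
  revert j; induction w as [|a w IH]; intros j.
  - destruct j; simpl; auto.
  - destruct j as [|j].
    + simpl skipn. simpl length. rewrite Nat.sub_0_r. simpl seq.
      specialize (IH 0%nat). simpl skipn in IH. rewrite Nat.sub_0_r in IH.
      rewrite <- (seq_shift _ 0). simpl map. rewrite map_map. unfold Rsum in *. simpl fold_right.
      change (fun x : nat => if isz (nth (S x) (a :: w) 0%nat) then 1 else 0) with
        (fun x : nat => if isz (nth x w 0%nat) then 1 else 0).
      rewrite <- IH. unfold nzeros. simpl filter.
      destruct (isz a); simpl length; rewrite ?S_INR; lra.
    + simpl skipn. simpl length. simpl Nat.sub. rewrite IH.
      rewrite <- (seq_shift _ j), map_map. auto.
Qed.

Lemma one_minus_le_exp x : 1 - x <= exp (- x).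
Proof.
  destruct (Req_dec x 0) as [->|]. rewrite Ropp_0, exp_0. lra.
  pose proof (exp_ineq1 (- x)). lra.
Qed.

Lemma exp_pow_INR a m : exp a ^ m = exp (a * INR m).
Proof.
  induction m. simpl. rewrite Rmult_0_r, exp_0; auto.
  rewrite S_INR. simpl. rewrite IHm, <- exp_plus. f_equal. ring.
Qed.

(* Let g >= 0 be a permutation-invariant weight on words of length n,
   and let tail_weight j be the g-weight of the words having more than r nonzero letters
   and j leading zeros.  Such a word has at most n - j - (r+1) zeros after position j;
   averaging over the transpositions (j i), i >= j, shows that one more leading zero
   costs a factor (n - j - (r+1)) / (n - j) <= 1 - (r+1)/n. *)
Section Counting.
Variable d n r : nat.
Variable g : list nat -> R.
Hypothesis g_nonneg : forall w, 0 <= g w.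
Hypothesis g_sym : forall j i w, (j < n)%nat -> (i < n)%nat -> In w (words d n) ->
  g (permute n (transp j i) w) = g w.

Definition tail_weight (j : nat) : R :=
  Rsum (map (fun w => if zero_prefix j w && Nat.ltb r (nnz w) then g w else 0) (words d n)).

Lemma tail_weight_nonneg j : 0 <= tail_weight j.
Proof. apply Rsum_nonneg. intros. destruct (_ && _); auto; lra. Qed.

(* Sum over i >= j of the weight of the words in tail_weight j with a zero at position i. *)
Let zero_count (j : nat) : R :=
  Rsum (map (fun w => (if zero_prefix j w && Nat.ltb r (nnz w) then g w else 0) *
    INR (nzeros (skipn j w))) (words d n)).

Lemma zero_count_le j : (j <= n)%nat ->
  zero_count j <= (INR (n - j) - INR (S r)) * tail_weight j.
Proof.
  intros Hjn. unfold zero_count, tail_weight. rewrite <- Rsum_scal. apply Rsum_le. intros w Hw.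
  destruct (zero_prefix j w) eqn:Hf; destruct (Nat.ltb_spec r (nnz w)); cbn [andb]; try lra.
  pose proof (words_length _ _ _ Hw) as Hl.
  assert (Hz : (nzeros (skipn j w) + nnz w)%nat = (n - j)%nat).
  { rewrite <- (firstn_skipn j w) at 2. rewrite nnz_app, zero_prefix_firstn, nnz_zeros by (auto; lia).
    pose proof (nnz_nzeros (skipn j w)) as Hnz. rewrite length_skipn in Hnz; lia. }
  assert (INR (nzeros (skipn j w)) <= INR (n - j) - INR (S r)).
  { rewrite <- Hz, plus_INR. assert (INR (S r) <= INR (nnz w)) by (apply le_INR; lia). lra. }
  pose proof (g_nonneg w). nra.
Qed.

(* By symmetry each position i >= j contributes tail_weight (S j). *)
Lemma zero_count_eq j : (j < n)%nat -> zero_count j = INR (n - j) * tail_weight (S j).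
Proof.
  intros Hj. unfold zero_count.
  transitivity (Rsum (map (fun i => tail_weight (S j)) (seq j (n - j)))).
  2: rewrite Rsum_const, length_seq; auto.
  transitivity (Rsum (map (fun w => Rsum (map (fun i =>
      if zero_prefix j w && Nat.ltb r (nnz w) && isz (nth i w 0%nat) then g w else 0)
      (seq j (n - j)))) (words d n))).
  { apply Rsum_ext; intros w Hw. rewrite nzeros_skipn, (words_length _ _ _ Hw), <- Rsum_scal.
    apply Rsum_ext; intros i _. destruct (zero_prefix j w && _), (isz _); simpl; lra. }
  rewrite Rsum_swap. apply Rsum_ext; intros i Hi. apply in_seq in Hi.
  unfold tail_weight. rewrite <- (Rsum_permute d n (transp j i)) by (apply transp_perm; lia).
  apply Rsum_ext; intros w Hw. pose proof (words_length _ _ _ Hw) as Hl.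
  assert (Hfz : zero_prefix j (permute n (transp j i) w) = zero_prefix j w).
  { unfold zero_prefix. apply forallb_ext_in. intros x Hx. apply in_seq in Hx.
    rewrite nth_permute by lia. unfold transp.
    destruct (Nat.eq_dec x j), (Nat.eq_dec x i); try lia; auto. }
  rewrite Hfz, (nnz_perm _ w (permute_Permutation n _ w (transp_perm n j i Hj ltac:(lia)) Hl)).
  rewrite nth_permute by lia. rewrite g_sym by (auto; lia). rewrite zero_prefix_S.
  unfold transp. destruct (Nat.eq_dec i j) as [->|]; [|destruct (Nat.eq_dec i i); [|lia]];
  destruct (zero_prefix j w), (Nat.ltb r (nnz w)), (isz (nth j w 0%nat)); simpl; auto.
Qed.

Lemma tail_weight_step j : (j < n)%nat -> (S r <= n)%nat ->
  tail_weight (S j) <= (1 - INR (S r) / INR n) * tail_weight j.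
Proof.
  intros Hj Hr. pose proof (zero_count_le j ltac:(lia)) as H1. rewrite zero_count_eq in H1 by auto.
  pose proof (tail_weight_nonneg j). pose proof (tail_weight_nonneg (S j)).
  assert (Hnj : 0 < INR (n - j)) by (apply lt_0_INR; lia).
  assert (INR (n - j) <= INR n) by (apply le_INR; lia).
  assert (Hstep : tail_weight (S j) <= (1 - INR (S r) / INR (n - j)) * tail_weight j).
  { apply Rmult_le_reg_l with (INR (n - j)); auto.
    replace (INR (n - j) * ((1 - INR (S r) / INR (n - j)) * tail_weight j))
      with ((INR (n - j) - INR (S r)) * tail_weight j) by (field; lra). auto. }
  assert (INR (S r) / INR n <= INR (S r) / INR (n - j)).
  { unfold Rdiv. apply Rmult_le_compat_l. apply pos_INR. apply Rinv_le_contravar; auto. }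
  nra.
Qed.

Lemma tail_weight_pow m : (S r <= n)%nat -> (m <= n)%nat ->
  tail_weight m <= (1 - INR (S r) / INR n) ^ m * tail_weight 0.
Proof.
  intros Hr. induction m; intros Hm. simpl; lra.
  assert (Hrho : 0 <= 1 - INR (S r) / INR n).
  { assert (INR (S r) <= INR n) by (apply le_INR; lia).
    assert (0 < INR n) by (apply lt_0_INR; lia).
    assert (INR (S r) / INR n <= 1).
    { unfold Rdiv. rewrite <- (Rinv_r (INR n)) by lra.
      apply Rmult_le_compat_r; [left; apply Rinv_0_lt_compat|]; lra. }
    lra. }
  simpl. rewrite Rmult_assoc. eapply Rle_trans; [apply tail_weight_step; lia|].
  apply Rmult_le_compat_l; auto. apply IHm; lia.
Qed.

Lemma tail_weight_exp m : (m + r <= n)%nat ->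
  tail_weight m <= exp (- (INR m * INR r) / INR n) * tail_weight 0.
Proof.
  intros Hmr. pose proof (tail_weight_nonneg 0).
  destruct m as [|m'].
  { simpl. unfold Rdiv. rewrite Rmult_0_l, Ropp_0, Rmult_0_l, exp_0. lra. }
  assert (Hn : 0 < INR n) by (apply lt_0_INR; lia).
  set (rho := 1 - INR (S r) / INR n).
  assert (Hrho0 : 0 <= rho).
  { unfold rho. assert (INR (S r) <= INR n) by (apply le_INR; lia).
    assert (INR (S r) / INR n <= 1).
    { unfold Rdiv. rewrite <- (Rinv_r (INR n)) by lra.
      apply Rmult_le_compat_r; [left; apply Rinv_0_lt_compat|]; lra. }
    lra. }
  assert (Hrho : rho <= exp (- (INR r / INR n))).
  { eapply Rle_trans; [apply one_minus_le_exp|]. left. apply exp_increasing.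
    rewrite S_INR. unfold Rdiv. apply Ropp_lt_contravar, Rmult_lt_compat_r.
    apply Rinv_0_lt_compat; auto. lra. }
  eapply Rle_trans; [apply tail_weight_pow; lia|]. apply Rmult_le_compat_r; auto.
  eapply Rle_trans; [apply pow_incr; split; [exact Hrho0 | exact Hrho]|].
  rewrite exp_pow_INR. right. f_equal. field. lra.
Qed.
End Counting.

Lemma filter_isz w : filter isz w = repeat 0%nat (nzeros w).
Proof.
  unfold nzeros. induction w; simpl; auto. destruct (isz a) eqn:E; simpl; auto.
  unfold isz in E. apply Nat.eqb_eq in E. subst. f_equal; auto.
Qed.

Lemma sort_zeros_first w : exists pi, is_perm (length w) pi /\
  permute (length w) pi w = repeat 0%nat (nzeros w) ++ filter (fun a => negb (isz a)) w.
Proof.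
  set (k := length w). set (P := fun i => isz (nth i w 0%nat)).
  set (L := filter P (seq 0 k) ++ filter (fun i => negb (P i)) (seq 0 k)).
  assert (HL : length L = k) by (unfold L; rewrite length_app, filter_length, length_seq; auto).
  assert (HLin : forall i, In i L -> (i < k)%nat).
  { intros i Hi. unfold L in Hi. apply in_app_or in Hi.
    destruct Hi as [Hi|Hi]; apply filter_In in Hi; destruct Hi as [Hi _]; apply in_seq in Hi; lia. }
  assert (HND : NoDup L).
  { unfold L. apply NoDup_app; try apply NoDup_filter, seq_NoDup.
    intros i H1 H2. apply filter_In in H1, H2. destruct H1 as [_ H1], H2 as [_ H2].
    rewrite H1 in H2. discriminate. }
  set (pi := fun i => nth i L 0%nat).
  assert (Hmap : map pi (seq 0 k) = L) by (unfold pi; rewrite <- HL; apply map_nth_seq).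
  exists pi. split.
  - split. intros i Hi. apply HLin. unfold pi. apply nth_In. lia.
    intros i j Hi Hj He. eapply NoDup_nth; eauto; lia.
  - unfold permute. rewrite Hmap. unfold L. rewrite map_app. unfold P.
    rewrite <- (filter_map_swap isz (fun i => nth i w 0%nat)).
    rewrite <- (filter_map_swap (fun a => negb (isz a)) (fun i => nth i w 0%nat)).
    unfold k. rewrite map_nth_seq, filter_isz. auto.
Qed.

Lemma wdelta_almost_power d k r w : (0 < d)%nat -> In w (words d k) -> (nnz w <= r)%nat ->
  (r <= k)%nat -> exists pi psi, is_perm k pi /\ forall x, In x (words d k) ->
    wdelta x w = tpow_tensor (k - r) e0 psi (permute k pi x).
Proof.
  intros Hd Hw Hnz Hr. pose proof (words_length _ _ _ Hw) as Hwl.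
  destruct (sort_zeros_first w) as [pi [Hpi Hs]]. rewrite Hwl in Hpi, Hs.
  set (s := permute k pi w) in *.
  assert (Hfs : firstn (k - r) s = repeat 0%nat (k - r)).
  { pose proof (nnz_nzeros w). rewrite Hs, firstn_app, repeat_length.
    replace (k - r - nzeros w)%nat with 0%nat by lia. rewrite firstn_O, app_nil_r.
    replace (nzeros w) with ((k - r) + (nzeros w - (k - r)))%nat by lia.
    rewrite repeat_app, firstn_app, repeat_length, Nat.sub_diag, firstn_O, app_nil_r.
    apply firstn_all2. rewrite repeat_length; lia. }
  exists pi, (fun y => wdelta y (skipn (k - r) s)). split; auto.
  intros x Hx. pose proof (words_length _ _ _ Hx) as Hxl.
  assert (Hpx : In (permute k pi x) (words d k)) by (apply permute_words; auto).
  unfold tpow_tensor. fold (tpow e0 (firstn (k - r) (permute k pi x))). rewrite (tpow_e0 d).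
  2: { apply words_In. apply words_In in Hpx. destruct Hpx as [Hl Ha]. split; auto.
       intros a Ha'. apply Ha. rewrite <- (firstn_skipn (k - r) (permute k pi x)).
       apply in_or_app; auto. }
  rewrite length_firstn, length_permute, Nat.min_l by lia. rewrite <- Hfs.
  assert (Hsplit : forall a b : list nat, firstn (k - r) a = firstn (k - r) b ->
    skipn (k - r) a = skipn (k - r) b -> a = b).
  { intros a b H1 H2. rewrite <- (firstn_skipn (k - r) a), <- (firstn_skipn (k - r) b). congruence. }
  unfold wdelta.
  destruct (list_eq_dec Nat.eq_dec x w) as [Exw|Exw];
  destruct (list_eq_dec Nat.eq_dec (firstn (k - r) s) (firstn (k - r) (permute k pi x))) as [E1|E1];
  destruct (list_eq_dec Nat.eq_dec (skipn (k - r) (permute k pi x)) (skipn (k - r) s)) as [E2|E2];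
  try Ceq; try (unfold s in *; subst; congruence).
  exfalso. apply Exw, (permute_inj k pi); auto.
Qed.

(** * Truncation to few nonzero letters *)

Definition truncation (r : nat) (v : vec) : vec :=
  fun u => if Nat.leb (nnz u) r then v u else C0.

Definition tail_norm2 (d k r : nat) (v : vec) : R :=
  Rsum (map (fun u => if Nat.ltb r (nnz u) then Cnorm2 (v u) else 0) (words d k)).

Lemma norm2_truncation_split d k r v :
  norm2 d k v = norm2 d k (truncation r v) + tail_norm2 d k r v.
Proof.
  unfold norm2, tail_norm2. rewrite <- Rsum_add. apply Rsum_ext. intros u _. unfold truncation.
  destruct (Nat.leb_spec (nnz u) r), (Nat.ltb_spec r (nnz u)); try lia;
  unfold C0, Cnorm2; simpl; ring.
Qed.

Lemma inner_truncation d k r v : inner d k v (truncation r v) = RtoC (norm2 d k (truncation r v)).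
Proof.
  rewrite <- inner_self. unfold inner, truncation. apply Csum_ext. intros u _.
  destruct (Nat.leb (nnz u) r); Ceq.
Qed.

Lemma truncation_symmetric d k r v : symmetric d k v -> symmetric d k (truncation r v).
Proof.
  intros Hs pi Hp u Hu. unfold Pperm, truncation.
  rewrite (nnz_perm _ u (permute_Permutation k pi u Hp (words_length _ _ _ Hu))).
  pose proof (Hs pi Hp u Hu) as H. unfold Pperm in H. rewrite H. auto.
Qed.

Lemma almost_power_scale d k r th a v : almost_power d k r th v ->
  almost_power d k r th (fun x => Cmul a (v x)).
Proof.
  intros [Hs [l [Hl Hv]]]. split.
  - intros pi Hp w Hw. pose proof (Hs pi Hp w Hw) as H. unfold Pperm in *. rewrite H. auto.
  - exists (map (fun p => (Cmul a (fst p), snd p)) l). split.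
    + intros p Hp. apply in_map_iff in Hp. destruct Hp as [q [<- Hq]]. simpl. apply Hl; auto.
    + intros w Hw. rewrite Hv, map_map, <- Csum_scal by auto. apply Csum_ext; intros.
      simpl. rewrite Cmul_assoc. reflexivity.
Qed.

Lemma Upow_adj_truncation_span d U theta k r v :
  (forall j, (j < d)%nat -> Cconj (U 0%nat j) = theta j) -> (0 < d)%nat -> (r <= k)%nat ->
  in_span d k (inV d k r theta) (Upow_adj d U k (truncation r v)).
Proof.
  intros U0 Hd Hr.
  exists (map (fun w => (v w, Upow_adj d U k (fun x => wdelta x w)))
    (filter (fun w => Nat.leb (nnz w) r) (words d k))). split.
  - intros p Hp. apply in_map_iff in Hp. destruct Hp as [w [<- Hw]]. apply filter_In in Hw.
    destruct Hw as [Hw Hle]. apply Nat.leb_le in Hle. simpl.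
    destruct (wdelta_almost_power d k r w Hd Hw Hle Hr) as [pi [psi [Hpi Hdelta]]].
    exists pi, (Upow_adj d U (k - (k - r)) psi). split; auto.
    intros x Hx.
    transitivity (Upow_adj d U k (Pperm k pi (tpow_tensor (k - r) e0 psi)) x).
    { apply Upow_adj_ext. intros y Hy. unfold Pperm. apply Hdelta; auto. }
    rewrite Upow_adj_Pperm by auto. unfold Pperm.
    apply Upow_adj_tpow_tensor; auto. lia. apply permute_words; auto.
  - intros x Hx. rewrite map_map. simpl. unfold Upow_adj at 1.
    transitivity (Csum (map (fun w => Cmul (v w) (Cconj (Uentry U w x)))
      (filter (fun w => Nat.leb (nnz w) r) (words d k)))).
    2: { apply Csum_ext. intros w Hw. apply filter_In in Hw. destruct Hw as [Hw _]. f_equal.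
         unfold Upow_adj. rewrite (Csum_wdelta d k (fun y => Cconj (Uentry U y x)) w Hw). auto. }
    rewrite Csum_filter. apply Csum_ext. intros y _. unfold truncation.
    destruct (Nat.leb (nnz y) r); Ceq.
Qed.

(* Only the all-zero prefix contributes to tail_weight m on words of length m + k. *)
Lemma tail_weight_prefix d m k r g : (0 < d)%nat ->
  tail_weight d (m + k) r g m =
  Rsum (map (fun u => if Nat.ltb r (nnz u) then g (repeat 0%nat m ++ u) else 0) (words d k)).
Proof.
  intros Hd. unfold tail_weight. rewrite Rsum_words_app.
  set (F := fun a => Rsum (map (fun u => if Nat.ltb r (nnz (a ++ u)) then g (a ++ u) else 0)
    (words d k))).
  transitivity (Rsum (map (fun a => if list_eq_dec Nat.eq_dec a (repeat 0%nat m) then F a else 0)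
    (words d m))).
  - apply Rsum_ext. intros a Ha. pose proof (words_length _ _ _ Ha) as Hal.
    destruct (list_eq_dec Nat.eq_dec a (repeat 0%nat m)) as [->|Hne].
    + apply Rsum_ext; intros u _. rewrite <- (repeat_length 0%nat m) at 1.
      rewrite zero_prefix_app, repeat_length, zero_prefix_repeat. auto.
    + transitivity (Rsum (map (fun _ => 0) (words d k))); [|rewrite Rsum_const; ring].
      apply Rsum_ext; intros u _. rewrite <- Hal, zero_prefix_app, Hal.
      destruct (zero_prefix m a) eqn:Hfa; auto.
      exfalso. apply Hne. apply (zero_prefix_words d); auto.
  - rewrite Rsum_delta by (auto using words_NoDup, repeat_words).
    unfold F. apply Rsum_ext; intros u _. rewrite nnz_app, nnz_zeros. auto.
Qed.

Lemma inner_tpow_e0 d k v : (0 < d)%nat ->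
  inner d k v (tpow e0) = Cconj (v (repeat 0%nat k)).
Proof.
  intros Hd. unfold inner.
  rewrite <- (Csum_wdelta_l d k (fun w => Cconj (v w)) (repeat 0%nat k)) by (apply repeat_words; auto).
  apply Csum_ext. intros w Hw. pose proof (words_length _ _ _ Hw) as Hl.
  rewrite (tpow_e0 d) by (rewrite Hl; auto). rewrite Hl. auto.
Qed.

Lemma distance_estimate c2 N2 q2 e E : 0 < c2 -> c2 <= N2 -> N2 = q2 + e -> 0 <= e ->
  e <= E * E -> 0 <= E -> 2 * sqrt (1 - q2 / N2) <= 2 * sqrt 2 * / sqrt c2 * E.
Proof.
  intros Hc HcN HN He HeE HE.
  assert (Hsc : 0 < sqrt c2) by (apply sqrt_lt_R0; auto).
  assert (Hs2 : 1 <= sqrt 2) by (rewrite <- sqrt_1; apply sqrt_le_1_alt; lra).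
  assert (H1 : 1 - q2 / N2 <= (E * / sqrt c2) * (E * / sqrt c2)).
  { replace (E * / sqrt c2 * (E * / sqrt c2)) with (E * E / (sqrt c2 * sqrt c2)) by (field; lra).
    rewrite sqrt_sqrt by lra. replace (1 - q2 / N2) with (e / N2) by (rewrite HN; field; lra).
    unfold Rdiv. apply Rmult_le_compat; auto; try lra.
    left; apply Rinv_0_lt_compat; lra. apply Rinv_le_contravar; auto. }
  apply sqrt_le_1_alt in H1. rewrite sqrt_square in H1.
  2: { apply Rmult_le_pos; auto. left; apply Rinv_0_lt_compat; auto. }
  assert (0 <= E * / sqrt c2) by (apply Rmult_le_pos; auto; left; apply Rinv_0_lt_compat; auto).
  replace (2 * sqrt 2 * / sqrt c2 * E) with (2 * sqrt 2 * (E * / sqrt c2)) by ring. nra.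
Qed.

Lemma unit_vec1_dim_pos d th : unit_vec1 d th -> (0 < d)%nat.
Proof.
  intros H. destruct d; [|lia]. unfold unit_vec1, inner1 in H. simpl in H.
  unfold C0, C1 in H. inversion H. lra.
Qed.

(** * The construction *)

Section Construction.
Variables (d m k : nat) (Psi : vec) (theta : vec1).
Hypothesis HPsi : unit_vec d (m + k) Psi.
Hypothesis Hsym : symmetric d (m + k) Psi.
Hypothesis Htheta : unit_vec1 d theta.
Hypothesis Hov : inner d (m + k) Psi (tpow theta) <> C0.

Let c : C := inner d (m + k) Psi (tpow theta).
Let phi : vec := contr d theta m Psi.

Let dim_pos : (0 < d)%nat := unit_vec1_dim_pos d theta Htheta.

Lemma overlap_le_norm2 : Cnorm2 c <= norm2 d k phi.
Proof.
  unfold c, phi. rewrite inner_tpow_contr.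
  pose proof (Cauchy_Schwarz_inner d k (contr d theta m Psi) (tpow theta)) as H.
  rewrite (unit_vec_norm2 d k (tpow theta) (tpow_unit d k theta Htheta)) in H. lra.
Qed.

Lemma contr_norm2_pos : 0 < norm2 d k phi.
Proof. eapply Rlt_le_trans; [apply Cnorm2_pos, Hov|apply overlap_le_norm2]. Qed.

Definition reduced_vec : vec := normalize d k (contr d theta m Psi).

Lemma reduced_vec_unit : unit_vec d k reduced_vec.
Proof. apply normalize_unit, contr_norm2_pos. Qed.

(* |<x, Psi_nm>|^2 <= |<x, phi>|^2 / |c|^2 <= <x, tr_{1..m}(|Psi><Psi|) x> / |c|^2. *)
Lemma reduced_vec_bound :
  loewner_le d k (proj reduced_vec) (Oscale (/ Cnorm2 c) (ptrace d m (proj Psi))).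
Proof.
  intros x. rewrite qform_sub, qform_scale, qform_ptrace, qform_proj.
  set (G := Rsum (map (fun a => Cnorm2 (inner d k x (fun u => Psi (a ++ u)))) (words d m))).
  assert (HG : 0 <= G) by (apply Rsum_nonneg; intros; apply Cnorm2_nonneg).
  assert (HCS : Cnorm2 (inner d k x phi) <= G).
  { unfold phi. rewrite inner_contr.
    pose proof (Cauchy_Schwarz (tpow theta) (fun a => inner d k x (fun u => Psi (a ++ u)))
      (words d m)) as H.
    fold (norm2 d m (tpow theta)) in H.
    rewrite (unit_vec_norm2 d m (tpow theta) (tpow_unit d m theta Htheta)) in H. fold G in H. lra. }
  assert (Hc : 0 < Cnorm2 c) by (apply Cnorm2_pos, Hov).
  assert (HN : Cnorm2 c <= norm2 d k phi) by apply overlap_le_norm2.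
  assert (Hx : Cnorm2 (inner d k x reduced_vec) = / norm2 d k phi * Cnorm2 (inner d k x phi)).
  { unfold reduced_vec. fold phi. rewrite inner_normalize, Cnorm2_mul, Cnorm2_RtoC.
    rewrite <- Rinv_mult, sqrt_sqrt. reflexivity. pose proof contr_norm2_pos. lra. }
  assert (/ norm2 d k phi * Cnorm2 (inner d k x phi) <= / Cnorm2 c * G).
  { apply Rmult_le_compat; auto using Cnorm2_nonneg.
    left; apply Rinv_0_lt_compat; lra. apply Rinv_le_contravar; auto. }
  rewrite Hx. unfold Csub, Cim, Cre, Cmul, Cadd, Copp, RtoC; simpl. split; [ring | lra].
Qed.

Let U : nat -> nat -> C := householder d theta.
Let Ucol := householder_col d theta.
Let Urow := householder_row d theta dim_pos.
Let U0 := householder_0 d theta dim_pos Htheta.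

Definition rotated : vec := Upow d (householder d theta) (m + k) Psi.
(* The rotated image of phi: the rotated state on words beginning with m zeros. *)
Definition rotated_slice : vec := fun u => rotated (repeat 0%nat m ++ u).

Lemma rotated_symmetric : symmetric d (m + k) rotated.
Proof. apply Upow_symmetric; auto. Qed.

Lemma rotated_norm2 : norm2 d (m + k) rotated = 1.
Proof. unfold rotated. rewrite norm2_Upow by auto. apply unit_vec_norm2; auto. Qed.

Lemma rotated_slice_symmetric : symmetric d k rotated_slice.
Proof.
  intros pi Hp u Hu. unfold Pperm, rotated_slice.
  rewrite <- (permute_shiftp m k pi (repeat 0%nat m) u)
    by (rewrite ?repeat_length; eauto using words_length).
  pose proof (rotated_symmetric (shiftp m pi) (shiftp_perm m k pi Hp) (repeat 0%nat m ++ u)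
    (words_app d m k _ _ (repeat_words d m dim_pos) Hu)) as H.
  unfold Pperm in H. auto.
Qed.

Lemma Upow_phi u : In u (words d k) -> Upow d U k phi u = rotated_slice u.
Proof. intros Hu. apply Upow_contr; auto. Qed.

Lemma rotated_slice_norm2 : norm2 d k rotated_slice = norm2 d k phi.
Proof.
  rewrite <- (norm2_Upow d U Ucol k phi). unfold norm2.
  apply Rsum_ext. intros u Hu. rewrite Upow_phi; auto.
Qed.

Lemma rotated_slice_zero : Cnorm2 (rotated_slice (repeat 0%nat k)) = Cnorm2 c.
Proof.
  unfold rotated_slice. rewrite <- repeat_app, <- Cnorm2_conj, <- (inner_tpow_e0 d) by apply dim_pos.
  unfold rotated. rewrite <- inner_adj. unfold c. f_equal.
  apply inner_ext; auto. intros. apply Upow_adj_tpow; auto.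
Qed.

Section Truncated.
Variable r : nat.
Hypothesis Hr : (r <= k)%nat.

Let Q : vec := truncation r rotated_slice.

Definition almost_power_vec : vec := normalize d k (Upow_adj d (householder d theta) k Q).

Lemma truncation_norm2_pos : 0 < norm2 d k Q.
Proof.
  apply Rlt_le_trans with (Cnorm2 (Q (repeat 0%nat k))).
  - unfold Q, truncation. rewrite nnz_zeros. simpl. rewrite rotated_slice_zero.
    apply Cnorm2_pos, Hov.
  - apply (Rsum_in (fun u => Cnorm2 (Q u))). intros; apply Cnorm2_nonneg.
    apply repeat_words, dim_pos.
Qed.

Lemma almost_power_vec_unit : unit_vec d k almost_power_vec.
Proof.
  apply normalize_unit. rewrite norm2_Upow_adj by auto. apply truncation_norm2_pos.
Qed.

Lemma almost_power_vec_almost_power : almost_power d k r theta almost_power_vec.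
Proof.
  apply almost_power_scale. split.
  - apply Upow_adj_symmetric, truncation_symmetric, rotated_slice_symmetric.
  - apply Upow_adj_truncation_span; auto.
Qed.

Lemma tail_norm2_bound : tail_norm2 d k r rotated_slice <= exp (- (INR m * INR r) / INR (m + k)).
Proof.
  set (g := fun w => Cnorm2 (rotated w)).
  assert (Hg0 : forall w, 0 <= g w) by (intros; apply Cnorm2_nonneg).
  assert (Hgsym : forall j i w, (j < m + k)%nat -> (i < m + k)%nat -> In w (words d (m + k)) ->
    g (permute (m + k) (transp j i) w) = g w).
  { intros j i w Hj Hi Hw. unfold g.
    pose proof (rotated_symmetric (transp j i) (transp_perm _ j i Hj Hi) w Hw) as H.
    unfold Pperm in H. rewrite H; auto. }
  assert (Htail : tail_norm2 d k r rotated_slice = tail_weight d (m + k) r g m)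
    by (rewrite tail_weight_prefix by apply dim_pos; reflexivity).
  assert (Hw0 : tail_weight d (m + k) r g 0 <= 1).
  { rewrite <- rotated_norm2. apply Rsum_le. intros w _.
    destruct (_ && _); [unfold g; lra | apply Cnorm2_nonneg]. }
  rewrite Htail. eapply Rle_trans; [apply tail_weight_exp; auto; lia|].
  pose proof (exp_pos (- (INR m * INR r) / INR (m + k))). nra.
Qed.

Lemma overlap_reduced_almost_power :
  Cnorm2 (inner d k reduced_vec almost_power_vec) = norm2 d k Q / norm2 d k phi.
Proof.
  pose proof contr_norm2_pos. pose proof truncation_norm2_pos.
  unfold reduced_vec, almost_power_vec, normalize. fold phi.
  rewrite norm2_Upow_adj, inner_scal, inner_adj by auto.
  rewrite (inner_ext d k _ rotated_slice Q Q) by (auto using Upow_phi).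
  unfold Q. rewrite inner_truncation. fold Q. rewrite Cconj_RtoC, !Cnorm2_mul, !Cnorm2_RtoC.
  rewrite <- !Rinv_mult, !sqrt_sqrt by lra. field. lra.
Qed.

Lemma almost_power_vec_distance : exists t : R,
  is_trnorm d k (Osub (proj reduced_vec) (proj almost_power_vec)) t /\
  t <= 2 * sqrt 2 * / Cmod c * exp (- (INR m * INR r) / (2 * INR (m + k))).
Proof.
  exists (2 * sqrt (1 - Cnorm2 (inner d k reduced_vec almost_power_vec))). split.
  { apply trnorm_pure; [apply reduced_vec_unit | apply almost_power_vec_unit]. }
  rewrite overlap_reduced_almost_power, Cmod_Cnorm2.
  set (E := exp (- (INR m * INR r) / (2 * INR (m + k)))).
  assert (HEE : E * E = exp (- (INR m * INR r) / INR (m + k))).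
  { unfold E. rewrite <- exp_plus. f_equal. destruct (Nat.eq_dec (m + k) 0) as [->|Hn].
    - simpl. unfold Rdiv. rewrite Rmult_0_r, Rinv_0. ring.
    - field. apply not_0_INR. exact Hn. }
  apply distance_estimate with (e := tail_norm2 d k r rotated_slice).
  - apply Cnorm2_pos, Hov.
  - apply overlap_le_norm2.
  - rewrite <- rotated_slice_norm2. apply norm2_truncation_split.
  - apply Rsum_nonneg. intros. destruct (Nat.ltb _ _); [apply Cnorm2_nonneg | lra].
  - rewrite HEE. apply tail_norm2_bound.
  - left; apply exp_pos.
Qed.
End Truncated.
End Construction.

Theorem lemma2 (d n : nat) (Psi : vec) (theta : vec1)
  (HPsi : unit_vec d n Psi) (Hsym : symmetric d n Psi)
  (Htheta : unit_vec1 d theta)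
  (Hov : inner d n Psi (tpow theta) <> C0) :
  forall m : nat, (m <= n)%nat ->
  exists Psi_nm : vec,
    unit_vec d (n - m) Psi_nm /\
    loewner_le d (n - m) (proj Psi_nm)
      (Oscale (/ (Cmod (inner d n Psi (tpow theta)) ^ 2)) (ptrace d m (proj Psi))) /\
    forall r : nat, (r <= n - m)%nat ->
    exists Psi_nmr : vec,
      unit_vec d (n - m) Psi_nmr /\
      almost_power d (n - m) r theta Psi_nmr /\
      exists t : R, is_trnorm d (n - m) (Osub (proj Psi_nm) (proj Psi_nmr)) t /\
        t <= 2 * sqrt 2 * / Cmod (inner d n Psi (tpow theta))
               * exp (- (INR m * INR r) / (2 * INR n)).
Proof.
  intros m Hm.
  remember (n - m)%nat as k eqn:Hk.
  replace n with (m + k)%nat in * by lia. clear Hk Hm.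
  exists (reduced_vec d m k Psi theta). split; [|split].
  - apply reduced_vec_unit; auto.
  - rewrite Cmod_sq. apply reduced_vec_bound; auto.
  - intros r Hr. exists (almost_power_vec d m k Psi theta r). split; [|split].
    + apply almost_power_vec_unit; auto.
    + apply almost_power_vec_almost_power; auto.
    + apply almost_power_vec_distance; auto.
Qed.
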